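(* Let $\lambda>0$ and $a\in(0,1/2)$. The limit $$\textsc{f}(\lambda,a):=\lim_{N\to\infty,\ N \text{ even}}\frac1N\log Z^{\lambda,a}_N-\log 2$$ exists and $$\textsc{f}(\lambda,a)=\max\Big\{0,\ \max_{d\in[2a,1]}\Big(\textsc{f}(\lambda)\big(1-\tfrac{2a}{d}\big)-\tfrac{2a}{d}q(d)\Big)\Big\}.$$ If $\textsc{f}(\lambda,a)>0$ (so that $\lambda>2$), the inner maximum over $d\in[2a,1]$ is attained at $$d=d_\lambda:=\sqrt{1-\exp(-2\textsc{f}(\lambda))}=1-\frac{2}{\lambda},$$ and consequently $$\textsc{f}(\lambda,a)=\Big(\textsc{f}(\lambda)\big(1-\tfrac{2a}{d_\lambda}\big)-\tfrac{2a}{d_\lambda}q(d_\lambda)\Big)_+=\Big(\textsc{f}(\lambda)-a\log\Big(\frac{1+d_\lambda}{1-d_\lambda}\Big)\Big)_+ .$$ The function $(a,\lambda)\mapsto\textsc{f}(\lambda,a)$ is analytic except on the critical curve $\lambda=\lambda_c(a)$, where $\lambda_c(a)$ is the unique solution of $$\textsc{f}(\lambda)=a\log\Big(\frac{1+d_\lambda}{1-d_\lambda}\Big)=a\log(\lambda-1),$$ and the right derivative of $\lambda\mapsto \textsc{f}(\lambda,a)$ at $\lambda=\lambda_c(a)$ is positive (the transition is of first order).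
   Context: For a real $s$, $\langle s\rangle$ denotes the smallest even integer $\ge s$. For $N$ even and $a\in(0,1/2)$, let $\mathcal S^a_N$ be the set of $\eta=(\eta_x)_{x\in\{0,\dots,N\}}$ with $\eta_x\in\mathbb Z_{\ge0}$ for all $x$, $\eta_0=\eta_N=\langle aN\rangle$ and $|\eta_{x+1}-\eta_x|=1$ for all $x$. Let $H(\eta)=\#\{x\in\{0,\dots,N\}:\eta_x=0\}$ and $Z^{\lambda,a}_N=\sum_{\eta\in\mathcal S^a_N}\lambda^{H(\eta)}$. Define $\textsc{f}(\lambda)=\log\big(\frac{\lambda}{2\sqrt{\lambda-1}}\big)$ for $\lambda>2$ and $\textsc{f}(\lambda)=0$ for $\lambda\le2$ (the free energy of the pinning model with zero boundary conditions). For $d\in[0,1]$, $q(d)=\frac12\big[(1+d)\log(1+d)+(1-d)\log(1-d)\big]$ (with $0\log0=0$); equivalently $q(d)=-\lim_{N\to\infty}\frac1N\log\#\{\text{simple random walk paths of length }N\text{ from }0\text{ to }\langle dN\rangle\}+\log2$. *)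

From Stdlib Require Import Reals Lra ZArith List.
From Coquelicot Require Import Coquelicot.
Open Scope R_scope.

(* <s> : smallest even integer >= s, i.e. 2 * ceil(s/2).
   Stdlib's [up x] is the unique integer with x < up x <= x + 1, so
   ceil y = 1 - up (-y). *)
Definition even_ceil (s : R) : Z := (2 * (1 - up (- (s / 2))))%Z.

(* A configuration eta in S^a_N is encoded by its starting height
   eta_0 = <aN> and its list of N increments (true = +1, false = -1). *)
Fixpoint all_steps (n : nat) : list (list bool) :=
  match n with
  | O => nil :: nil
  | S m => map (cons true) (all_steps m) ++ map (cons false) (all_steps m)
  end.

Fixpoint heights (h : Z) (s : list bool) : list Z :=
  match s with
  | nil => h :: nil
  | b :: s' => h :: heights (if b then (h + 1)%Z else (h - 1)%Z) s'
  end.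

Definition valid_path (h : Z) (s : list bool) : bool :=
  forallb (fun z => Z.leb 0 z) (heights h s) && Z.eqb (last (heights h s) h) h.

Definition contacts (h : Z) (s : list bool) : nat :=
  length (filter (fun z => Z.eqb z 0) (heights h s)).

Definition Zpart (lam a : R) (N : nat) : R :=
  let h := even_ceil (a * INR N) in
  fold_right Rplus 0
    (map (fun s => if valid_path h s then lam ^ contacts h s else 0) (all_steps N)).

Definition fpin (lam : R) : R :=
  if Rlt_dec 2 lam then ln (lam / (2 * sqrt (lam - 1))) else 0.

(* q(d); note (1-d) * ln (1-d) = 0 at d = 1 since 0 * _ = 0 (0 log 0 = 0) *)
Definition q (d : R) : R :=
  / 2 * ((1 + d) * ln (1 + d) + (1 - d) * ln (1 - d)).

Definition gvar (lam a d : R) : R :=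
  fpin lam * (1 - 2 * a / d) - 2 * a / d * q d.

Definition dlam (lam : R) : R := sqrt (1 - exp (- 2 * fpin lam)).

Definition Ffree (lam a : R) : R :=
  real (Lim_seq (fun n => ln (Zpart lam a (2 * n)) / INR (2 * n) - ln 2)).

(* Real analyticity of a function of two real variables at (x0, y0):
   locally equal to an absolutely convergent double power series
   (summed along the diagonals i + j = n). *)
Definition analytic_at2 (F : R -> R -> R) (x0 y0 : R) : Prop :=
  exists r, 0 < r /\ exists c : nat -> nat -> R,
    forall x y, Rabs (x - x0) < r -> Rabs (y - y0) < r ->
      ex_series (fun n => sum_f_R0 (fun i =>
          Rabs (c i (n - i)%nat * (x - x0) ^ i * (y - y0) ^ (n - i))) n) /\
      is_series (fun n => sum_f_R0 (fun i =>
          c i (n - i)%nat * (x - x0) ^ i * (y - y0) ^ (n - i)) n) (F x y).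

From Stdlib Require Import Reals Lra Lia ZArith List Classical.
From Coquelicot Require Import Coquelicot.
Open Scope R_scope.

(* [Z_N] is a weighted sum over nonnegative walks from [h = <aN>] back to [h]: an
   entry of the [N]-th power of a transfer operator on the half-line. Splitting
   walks at their last contact with [0] and bounding both pieces by the
   supersolutions [exp (z L)], with [L = - ln (lam - 1) / 2] when [lam > 2], gives
   the upper bound; positive eigenfunctions ([z], or [exp (z L)]) and an averaging
   argument over the midpoint of the walk give a matching lower bound. Hence the
   limit is [max (0, fpin lam - a ln (lam - 1))] for [lam > 2] and [0] otherwise.
   This equals the variational formula because [q] is convex with [q' = artanh]
   and [artanh (1 - 2/lam) = ln (lam - 1) / 2], so the optimiser is a tangency
   point. Off the critical curve the free energy is locally [0] or the explicit
   function [ln lam - ln 2 - (1/2 + a) ln (lam - 1)], which is analytic, increases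
   through [lam_c], and has positive derivative there. *)

Definition weight (lam : R) (z : Z) : R := if Z.eqb z 0 then lam else 1.

(* [transfer lam psi M x] sums, over the walks of length [M] from [x] that stay
   nonnegative, the product of the weights of the first [M] visited sites times
   [psi] of the endpoint. *)
Fixpoint transfer (lam : R) (psi : Z -> R) (M : nat) (x : Z) : R :=
  match M with
  | O => if Z.leb 0 x then psi x else 0
  | S M' => if Z.leb 0 x
            then weight lam x * (transfer lam psi M' (x + 1) + transfer lam psi M' (x - 1))
            else 0
  end.

Definition delta (y z : Z) : R := if Z.eqb z y then 1 else 0.

Definition pinned (lam : R) (y z : Z) : R := weight lam z * delta y z.

Ltac zcases := repeat match goal with
  | |- context [Z.eqb ?a ?b] => destruct (Z.eqb_spec a b)
  | |- context [Z.leb ?a ?b] => destruct (Z.leb_spec a b)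
  end.

Definition valid_between (x y : Z) (s : list bool) : bool :=
  andb (forallb (fun z => Z.leb 0 z) (heights x s)) (Z.eqb (last (heights x s) x) y).

Definition step (b : bool) (x : Z) : Z := if b then (x + 1)%Z else (x - 1)%Z.

Lemma last_heights_default s x d d' : last (heights x s) d = last (heights x s) d'.
Proof.
  revert x; induction s as [|b s IH]; intros x; simpl; auto.
  destruct s; simpl; auto. destruct b0; apply IH.
Qed.

Lemma valid_between_cons x y b s :
  valid_between x y (b :: s) = andb (Z.leb 0 x) (valid_between (step b x) y s).
Proof.
  unfold valid_between, step; simpl.
  replace (last (x :: heights (if b then (x + 1)%Z else (x - 1)%Z) s) x)
    with (last (heights (if b then (x + 1)%Z else (x - 1)%Z) s) x).
  2:{ destruct s; [destruct b|]; reflexivity. }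
  rewrite (last_heights_default _ _ x (if b then (x + 1)%Z else (x - 1)%Z)).
  destruct s; [destruct b|]; simpl; destruct (Z.leb 0 x); reflexivity.
Qed.

Lemma pow_contacts_cons lam x b s :
  lam ^ contacts x (b :: s) = weight lam x * lam ^ contacts (step b x) s.
Proof. unfold contacts, weight, step; simpl. destruct (Z.eqb x 0); simpl; ring. Qed.

Lemma sum_list_app (l1 l2 : list R) :
  fold_right Rplus 0 (l1 ++ l2) = fold_right Rplus 0 l1 + fold_right Rplus 0 l2.
Proof. induction l1; simpl; [ring | rewrite IHl1; ring]. Qed.

Lemma sum_list_scal (A : Type) (f : A -> R) (c : R) (l : list A) :
  fold_right Rplus 0 (map (fun a => c * f a) l) = c * fold_right Rplus 0 (map f l).
Proof. induction l; simpl; [ring | rewrite IHl; ring]. Qed.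

Lemma path_sum_transfer lam M x y :
  fold_right Rplus 0
    (map (fun s => if valid_between x y s then lam ^ contacts x s else 0) (all_steps M))
  = transfer lam (pinned lam y) M x.
Proof.
  revert x; induction M as [|M IH]; intros x.
  - unfold valid_between, pinned, delta, weight, contacts; simpl.
    destruct (Z.leb 0 x); simpl; [|ring].
    destruct (Z.eqb x y), (Z.eqb x 0); simpl; ring.
  - simpl. rewrite map_app, sum_list_app, !map_map.
    assert (Hcons : forall b,
      map (fun s => if valid_between x y (b :: s) then lam ^ contacts x (b :: s) else 0)
          (all_steps M)
      = map (fun s => (if Z.leb 0 x then weight lam x else 0) *
               (if valid_between (step b x) y s then lam ^ contacts (step b x) s else 0))
          (all_steps M)).
    { intros b; apply map_ext; intros s.
      rewrite valid_between_cons, pow_contacts_cons.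
      destruct (Z.leb 0 x), (valid_between _ y s); simpl; ring. }
    rewrite (Hcons true), (Hcons false), !sum_list_scal, !IH.
    destruct (Z.leb 0 x); unfold step; ring.
Qed.

Lemma Zpart_transfer lam a N :
  Zpart lam a N
  = transfer lam (pinned lam (even_ceil (a * INR N))) N (even_ceil (a * INR N)).
Proof. apply path_sum_transfer. Qed.

Fixpoint rsum (f : nat -> R) (n : nat) : R :=
  match n with O => 0 | S n' => rsum f n' + f n' end.

Lemma rsum_ext f g n : (forall k, (k < n)%nat -> f k = g k) -> rsum f n = rsum g n.
Proof. induction n; intros H; simpl; auto. rewrite IHn, H; auto. Qed.

Lemma rsum_plus f g n : rsum (fun k => f k + g k) n = rsum f n + rsum g n.
Proof. induction n; simpl; [ring | rewrite IHn; ring]. Qed.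

Lemma rsum_scal c f n : rsum (fun k => c * f k) n = c * rsum f n.
Proof. induction n; simpl; [ring | rewrite IHn; ring]. Qed.

Lemma rsum_shift f n : rsum f (S n) = f O + rsum (fun k => f (S k)) n.
Proof. induction n; simpl in *; [ring | rewrite IHn; ring]. Qed.

Lemma rsum_eq0 f n : (forall k, (k < n)%nat -> f k = 0) -> rsum f n = 0.
Proof. induction n; intros H; simpl; auto. rewrite IHn, H; auto; ring. Qed.

Lemma rsum_le f g n : (forall k, (k < n)%nat -> f k <= g k) -> rsum f n <= rsum g n.
Proof.
  induction n; intros H; simpl; [lra|].
  pose proof (H n (Nat.lt_succ_diag_r n)).
  assert (rsum f n <= rsum g n) by (apply IHn; intros; apply H; lia). lra.
Qed.

Lemma rsum_const c n : rsum (fun _ => c) n = INR n * c.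
Proof. induction n; simpl rsum; [simpl; ring | rewrite IHn, S_INR; ring]. Qed.

Lemma rsum_lt_const f n T :
  (0 < n)%nat -> (forall k, (k < n)%nat -> f k < T) -> rsum f n < INR n * T.
Proof.
  intros Hn H. induction n as [|[|n] IH]; [lia | simpl; specialize (H O ltac:(lia)); lra |].
  change (rsum f (S n) + f (S n) < INR (S (S n)) * T). rewrite S_INR.
  assert (rsum f (S n) < INR (S n) * T) by (apply IH; [lia | intros; apply H; lia]).
  specialize (H (S n) ltac:(lia)). lra.
Qed.

Lemma exists_ge_average f n S :
  (0 < n)%nat -> S <= rsum f n -> exists k, (k < n)%nat /\ S / INR n <= f k.
Proof.
  intros Hn HS. apply NNPP. intros Hno.
  assert (Hlt : rsum f n < INR n * (S / INR n)).
  { apply rsum_lt_const; auto. intros k Hk. apply Rnot_le_lt. intros Hc. apply Hno; eauto. }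
  assert (0 < INR n) by (apply lt_0_INR; auto).
  replace (INR n * (S / INR n)) with S in Hlt by (field; lra). lra.
Qed.

Lemma rsum_delta f n z : (0 <= z < Z.of_nat n)%Z ->
  rsum (fun k => f k * delta (Z.of_nat k) z) n = f (Z.to_nat z).
Proof.
  induction n; intros Hz; [lia|]. simpl. unfold delta at 2.
  destruct (Z.eqb_spec z (Z.of_nat n)).
  - rewrite rsum_eq0; [subst z; rewrite Nat2Z.id; ring|].
    intros k Hk. unfold delta. destruct (Z.eqb_spec z (Z.of_nat k)); [lia | ring].
  - rewrite IHn by lia. ring.
Qed.

Lemma weight_nonneg lam z : 0 <= lam -> 0 <= weight lam z.
Proof. unfold weight; destruct (Z.eqb z 0); lra. Qed.

Lemma delta_nonneg y z : 0 <= delta y z.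
Proof. unfold delta; destruct (Z.eqb z y); lra. Qed.

Lemma pinned_nonneg lam y z : 0 <= lam -> 0 <= pinned lam y z.
Proof. intros; apply Rmult_le_pos; [apply weight_nonneg | apply delta_nonneg]; auto. Qed.

Section Transfer.

Variable lam : R.

Lemma transfer_neg psi M x : (x < 0)%Z -> transfer lam psi M x = 0.
Proof. intros Hx. destruct M; simpl; destruct (Z.leb_spec 0 x); try lia; reflexivity. Qed.

Lemma transfer_nonneg psi M x :
  0 <= lam -> (forall z, (0 <= z)%Z -> 0 <= psi z) -> 0 <= transfer lam psi M x.
Proof.
  intros Hl Hp. revert x; induction M; intros x; simpl; destruct (Z.leb_spec 0 x); try lra; auto.
  apply Rmult_le_pos; [apply weight_nonneg; auto|]. apply Rplus_le_le_0_compat; auto.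
Qed.

Lemma transfer_ext psi1 psi2 M x :
  (forall z, (0 <= z <= x + Z.of_nat M)%Z -> psi1 z = psi2 z) ->
  transfer lam psi1 M x = transfer lam psi2 M x.
Proof.
  revert x; induction M; intros x Hp; simpl; destruct (Z.leb_spec 0 x); auto.
  - apply Hp; lia.
  - rewrite (IHM (x + 1)%Z), (IHM (x - 1)%Z); auto; intros z Hz; apply Hp; lia.
Qed.

Lemma transfer_scal c psi M x :
  transfer lam (fun z => c * psi z) M x = c * transfer lam psi M x.
Proof.
  revert x; induction M; intros x; simpl; destruct (Z.leb 0 x); try ring. rewrite !IHM; ring.
Qed.

Lemma transfer_plus psi1 psi2 M x :
  transfer lam (fun z => psi1 z + psi2 z) M x = transfer lam psi1 M x + transfer lam psi2 M x.
Proof.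
  revert x; induction M; intros x; simpl; destruct (Z.leb 0 x); try ring. rewrite !IHM; ring.
Qed.

Lemma transfer_rsum g n M x :
  transfer lam (fun z => rsum (fun k => g k z) n) M x = rsum (fun k => transfer lam (g k) M x) n.
Proof.
  induction n; simpl.
  - revert x; induction M; intros x; simpl; destruct (Z.leb 0 x); rewrite ?IHM; ring.
  - rewrite (transfer_plus (fun z => rsum (fun k => g k z) n) (g n)), IHn. reflexivity.
Qed.

Lemma transfer_delta_expansion psi M x K :
  (0 <= x)%Z -> (x + Z.of_nat M < Z.of_nat K)%Z ->
  transfer lam psi M x = rsum (fun k => psi (Z.of_nat k) * transfer lam (delta (Z.of_nat k)) M x) K.
Proof.
  intros Hx HK.
  rewrite (transfer_ext psi (fun z => rsum (fun k => psi (Z.of_nat k) * delta (Z.of_nat k) z) K)).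
  - rewrite transfer_rsum. apply rsum_ext. intros k _. apply transfer_scal.
  - intros z Hz. rewrite rsum_delta, Z2Nat.id by lia. reflexivity.
Qed.

(* The operator applied once; there is no neighbour [-1] (walks are killed there). *)
Definition step_op (phi : Z -> R) (z : Z) : R :=
  weight lam z * (phi (z + 1)%Z + (if Z.eqb z 0 then 0 else phi (z - 1)%Z)).

Lemma transfer_left_neighbour psi M x :
  (0 <= x)%Z -> transfer lam psi M (x - 1) = if Z.eqb x 0 then 0 else transfer lam psi M (x - 1).
Proof. intros Hx. destruct (Z.eqb_spec x 0); [apply transfer_neg; lia | reflexivity]. Qed.

Lemma transfer_supersolution psi phi c M x :
  0 <= lam -> 0 <= c ->
  (forall z, (0 <= z)%Z -> psi z <= phi z) -> (forall z, (0 <= z)%Z -> 0 <= phi z) ->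
  (forall z, (0 <= z)%Z -> step_op phi z <= c * phi z) ->
  (0 <= x)%Z -> transfer lam psi M x <= c ^ M * phi x.
Proof.
  intros Hl Hc Hpp Hp0 Hs. revert x; induction M; intros x Hx; simpl;
    destruct (Z.leb_spec 0 x); try lia; [rewrite Rmult_1_l; auto|].
  assert (H1 : transfer lam psi M (x + 1) <= c ^ M * phi (x + 1)%Z) by (apply IHM; lia).
  assert (H2 : transfer lam psi M (x - 1) <= c ^ M * (if Z.eqb x 0 then 0 else phi (x - 1)%Z)).
  { rewrite transfer_left_neighbour by lia.
    destruct (Z.eqb_spec x 0); [lra | apply IHM; lia]. }
  specialize (Hs x Hx). unfold step_op in Hs.
  pose proof (weight_nonneg lam x Hl). pose proof (pow_le c M Hc).
  apply Rle_trans with (c ^ M * step_op phi x); unfold step_op; [|nra].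
  replace (c ^ M * _) with (weight lam x * (c ^ M * phi (x + 1)%Z
     + c ^ M * (if Z.eqb x 0 then 0 else phi (x - 1)%Z))) by ring.
  apply Rmult_le_compat_l; lra.
Qed.

Lemma transfer_eigen psi c M x :
  (forall z, (0 <= z)%Z -> step_op psi z = c * psi z) ->
  (0 <= x)%Z -> transfer lam psi M x = c ^ M * psi x.
Proof.
  intros Hs. revert x; induction M; intros x Hx; simpl; destruct (Z.leb_spec 0 x); try lia; [ring|].
  rewrite (IHM (x + 1)%Z), transfer_left_neighbour by lia.
  replace (if Z.eqb x 0 then 0 else transfer lam psi M (x - 1))
    with (c ^ M * (if Z.eqb x 0 then 0 else psi (x - 1)%Z))
    by (destruct (Z.eqb_spec x 0); [ring | symmetry; apply IHM; lia]).
  replace (c * c ^ M * psi x) with (c ^ M * (c * psi x)) by ring.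
  rewrite <- (Hs x Hx). unfold step_op. ring.
Qed.

End Transfer.

Lemma transfer_pinned_last_step lam M x y :
  transfer lam (pinned lam y) (S M) x
  = if Z.leb 0 y
    then weight lam y * (transfer lam (pinned lam (y + 1)) M x
                         + transfer lam (pinned lam (y - 1)) M x)
    else 0.
Proof.
  revert x y; induction M; intros x y.
  - simpl. unfold pinned, delta, weight. zcases; subst; try lia; ring.
  - change (transfer lam (pinned lam y) (S (S M)) x) with
      (if Z.leb 0 x then weight lam x * (transfer lam (pinned lam y) (S M) (x + 1)
                                         + transfer lam (pinned lam y) (S M) (x - 1)) else 0).
    rewrite (IHM (x + 1)%Z y), (IHM (x - 1)%Z y). cbn [transfer].
    destruct (Z.leb 0 x), (Z.leb 0 y); ring.
Qed.

Lemma transfer_pinned_sym lam M x y :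
  transfer lam (pinned lam y) M x = transfer lam (pinned lam x) M y.
Proof.
  revert x y; induction M; intros x y.
  - simpl. unfold pinned, delta, weight. zcases; subst; try lia; ring.
  - rewrite transfer_pinned_last_step. cbn [transfer].
    rewrite (IHM x (y + 1)%Z), (IHM x (y - 1)%Z). reflexivity.
Qed.

Lemma transfer_pinned_delta lam y M x :
  transfer lam (pinned lam y) M x = weight lam y * transfer lam (delta y) M x.
Proof.
  rewrite <- transfer_scal. apply transfer_ext. intros z _. unfold pinned, delta.
  destruct (Z.eqb_spec z y); subst; ring.
Qed.

Lemma transfer_chapman_kolmogorov lam psi M1 M2 x y :
  0 <= lam -> (forall z, (0 <= z)%Z -> 0 <= psi z) ->
  transfer lam (delta y) M1 x * transfer lam psi M2 y <= transfer lam psi (M1 + M2) x.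
Proof.
  intros Hl Hp. revert x; induction M1; intros x.
  - simpl. unfold delta. zcases; subst; try lra; rewrite Rmult_0_l; apply transfer_nonneg; auto.
  - simpl. destruct (Z.leb 0 x); [|lra].
    pose proof (IHM1 (x + 1)%Z). pose proof (IHM1 (x - 1)%Z). pose proof (weight_nonneg lam x Hl).
    rewrite Rmult_assoc, Rmult_plus_distr_r.
    apply Rmult_le_compat_l; lra.
Qed.

(* The second half of a walk [h -> k -> h] is the time reversal of a walk [h -> k]. *)
Lemma transfer_pinned_square lam h k n :
  0 <= lam ->
  weight lam k * transfer lam (delta k) n h ^ 2 <= transfer lam (pinned lam h) (n + n) h.
Proof.
  intros Hl. eapply Rle_trans;
    [|apply (transfer_chapman_kolmogorov lam (pinned lam h) n n h k Hl)].
  - rewrite transfer_pinned_sym, transfer_pinned_delta. right. ring.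
  - intros; apply pinned_nonneg; auto.
Qed.

(* Splitting a walk at its last visit to the origin; after it the walk avoids
   [0], which is the same as giving the origin weight [0]. *)
Lemma transfer_last_contact lam psi M x : psi 0%Z = 0 ->
  transfer lam psi M x
  = transfer 0 psi M x
    + rsum (fun s => transfer lam (pinned lam 0) s x * transfer 0 psi (M - 1 - s) 1) M.
Proof.
  intros H0. revert x; induction M; intros x; [simpl; ring|].
  destruct (Z.ltb_spec x 0) as [Hx|Hx].
  { rewrite !transfer_neg by lia. rewrite rsum_eq0; [ring|].
    intros k _. rewrite transfer_neg by lia. ring. }
  rewrite rsum_shift. replace (S M - 1 - 0)%nat with M by lia.
  destruct (Z.eqb_spec x 0) as [->|Hx0].
  - rewrite (rsum_ext _ (fun s => lam * (transfer lam (pinned lam 0) s 1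
                                         * transfer 0 psi (M - 1 - s) 1))).
    2:{ intros k Hk. replace (S M - 1 - S k)%nat with (M - 1 - k)%nat by lia.
        simpl. rewrite (transfer_neg lam _ k (-1)) by lia. unfold weight. simpl. ring. }
    rewrite rsum_scal. simpl.
    rewrite (transfer_neg lam psi M (-1)), (transfer_neg 0 psi M (-1)) by lia.
    rewrite IHM. unfold pinned, delta, weight. simpl. ring.
  - rewrite (rsum_ext _ (fun s =>
        transfer lam (pinned lam 0) s (x + 1) * transfer 0 psi (M - 1 - s) 1
        + transfer lam (pinned lam 0) s (x - 1) * transfer 0 psi (M - 1 - s) 1)).
    2:{ intros k Hk. replace (S M - 1 - S k)%nat with (M - 1 - k)%nat by lia.
        simpl. destruct (Z.leb_spec 0 x); try lia.
        unfold weight. destruct (Z.eqb_spec x 0); [lia | ring]. }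
    rewrite rsum_plus. simpl. destruct (Z.leb_spec 0 x); try lia.
    unfold pinned, delta, weight. destruct (Z.eqb_spec x 0); [lia|].
    rewrite (IHM (x + 1)%Z), (IHM (x - 1)%Z). unfold pinned, delta, weight. ring.
Qed.

Lemma transfer_mono_weight lam1 lam2 psi M x :
  0 <= lam1 <= lam2 -> (forall z, (0 <= z)%Z -> 0 <= psi z) ->
  transfer lam1 psi M x <= transfer lam2 psi M x.
Proof.
  intros Hl Hp. revert x; induction M; intros x; simpl; destruct (Z.leb 0 x); try lra.
  pose proof (IHM (x + 1)%Z). pose proof (IHM (x - 1)%Z).
  pose proof (transfer_nonneg lam1 psi M (x + 1) (proj1 Hl) Hp).
  pose proof (transfer_nonneg lam1 psi M (x - 1) (proj1 Hl) Hp).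
  assert (weight lam1 x <= weight lam2 x) by (unfold weight; destruct (Z.eqb x 0); lra).
  pose proof (weight_nonneg lam1 x (proj1 Hl)).
  apply Rmult_le_compat; lra.
Qed.

Lemma step_op_exp lam L z : (0 <= z)%Z ->
  step_op lam (fun z => exp (IZR z * L)) z
  = if Z.eqb z 0 then lam * exp L else (exp L + exp (- L)) * exp (IZR z * L).
Proof.
  intros Hz. unfold step_op, weight. destruct (Z.eqb_spec z 0) as [->|]; simpl.
  - rewrite Rmult_1_l. ring.
  - rewrite plus_IZR, minus_IZR.
    replace ((IZR z + 1) * L) with (IZR z * L + L) by ring.
    replace ((IZR z - 1) * L) with (IZR z * L + - L) by ring.
    rewrite !exp_plus. ring.
Qed.

Lemma contact_weight_bound lam L : (lam - 1) * exp (2 * L) <= 1 ->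
  lam * exp L <= exp L + exp (- L).
Proof.
  intros H.
  assert (Einv : exp (- L) * exp L = 1) by (rewrite <- exp_plus, Rplus_opp_l; apply exp_0).
  assert (E2 : exp (2 * L) = exp L * exp L) by (rewrite <- exp_plus; f_equal; ring).
  pose proof (exp_pos L). pose proof (exp_pos (- L)).
  apply Rmult_le_reg_r with (exp L); auto. nra.
Qed.

Lemma contact_weight_eq lam L : (lam - 1) * exp (2 * L) = 1 ->
  lam * exp L = exp L + exp (- L).
Proof.
  intros H.
  assert (Einv : exp (- L) * exp L = 1) by (rewrite <- exp_plus, Rplus_opp_l; apply exp_0).
  assert (E2 : exp (2 * L) = exp L * exp L) by (rewrite <- exp_plus; f_equal; ring).
  pose proof (exp_pos L). apply Rmult_eq_reg_r with (exp L); nra.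
Qed.

Section UpperBound.

Variables (lam L : R) (h : Z).
Hypotheses (Hlam : 0 < lam) (Hh : (1 <= h)%Z) (HL : L <= 0)
  (Hcontact : (lam - 1) * exp (2 * L) <= 1).

Let c := exp L + exp (- L).

Lemma transfer_avoiding_le M : transfer 0 (pinned lam h) M h <= 2 ^ M.
Proof.
  rewrite <- (Rmult_1_r (2 ^ M)).
  apply (transfer_supersolution 0 _ (fun _ => 1)); try lra; try lia.
  - intros z Hz. unfold pinned, delta, weight. zcases; subst; try lia; lra.
  - intros; lra.
  - intros z Hz. unfold step_op, weight. destruct (Z.eqb_spec z 0); lra.
Qed.

Lemma transfer_to_origin_le s :
  transfer lam (pinned lam 0) s h <= c ^ s * (lam * exp (IZR h * L)).
Proof.
  apply (transfer_supersolution lam _ (fun z => lam * exp (IZR z * L))); try lra; try lia.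
  - unfold c; pose proof (exp_pos L); pose proof (exp_pos (- L)); lra.
  - intros z Hz. pose proof (exp_pos (IZR z * L)).
    unfold pinned, delta, weight. destruct (Z.eqb_spec z 0) as [->|]; simpl.
    + rewrite Rmult_0_l, exp_0. lra.
    + nra.
  - intros z Hz. pose proof (exp_pos (IZR z * L)). nra.
  - intros z Hz.
    replace (step_op lam (fun z => lam * exp (IZR z * L)) z)
      with (lam * step_op lam (fun z => exp (IZR z * L)) z)
      by (unfold step_op; destruct (Z.eqb z 0); ring).
    rewrite step_op_exp by auto. destruct (Z.eqb_spec z 0) as [->|]; simpl.
    + rewrite Rmult_0_l, exp_0, Rmult_1_r. pose proof (contact_weight_bound lam L Hcontact).
      unfold c. nra.
    + unfold c. right. ring.
Qed.

Lemma transfer_from_one_le m :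
  transfer 0 (pinned lam h) m 1 <= c ^ m * exp ((IZR h - 1) * L).
Proof.
  apply (transfer_supersolution 0 _ (fun z => exp ((IZR h - IZR z) * L))); try lra; try lia.
  - unfold c; pose proof (exp_pos L); pose proof (exp_pos (- L)); lra.
  - intros z Hz. pose proof (exp_pos ((IZR h - IZR z) * L)).
    unfold pinned, delta, weight. zcases; subst; try lia; try lra.
    rewrite Rminus_diag, Rmult_0_l, exp_0. lra.
  - intros z Hz. pose proof (exp_pos ((IZR h - IZR z) * L)). lra.
  - intros z Hz. unfold step_op, weight, c. pose proof (exp_pos ((IZR h - IZR z) * L)).
    pose proof (exp_pos L). pose proof (exp_pos (- L)).
    destruct (Z.eqb_spec z 0); [nra|].
    rewrite plus_IZR, minus_IZR.
    replace ((IZR h - (IZR z + 1)) * L) with ((IZR h - IZR z) * L + - L) by ring.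
    replace ((IZR h - (IZR z - 1)) * L) with ((IZR h - IZR z) * L + L) by ring.
    rewrite !exp_plus. right. ring.
Qed.

Lemma transfer_pinned_le N :
  transfer lam (pinned lam h) N h
  <= 2 ^ N + INR N * lam * c ^ (N - 1) * exp ((2 * IZR h - 1) * L).
Proof.
  rewrite transfer_last_contact by (unfold pinned, delta; destruct (Z.eqb_spec 0 h); [lia | ring]).
  apply Rplus_le_compat; [apply transfer_avoiding_le|].
  replace (INR N * lam * c ^ (N - 1) * exp ((2 * IZR h - 1) * L))
    with (rsum (fun _ => lam * c ^ (N - 1) * exp ((2 * IZR h - 1) * L)) N)
    by (rewrite rsum_const; ring).
  apply rsum_le. intros s Hs.
  pose proof (transfer_nonneg lam (pinned lam 0) s h (Rlt_le _ _ Hlam)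
                (fun z _ => pinned_nonneg lam 0 z (Rlt_le _ _ Hlam))).
  pose proof (transfer_nonneg 0 (pinned lam h) (N - 1 - s) 1 (Rle_refl 0)
                (fun z _ => pinned_nonneg lam h z (Rlt_le _ _ Hlam))).
  eapply Rle_trans;
    [apply Rmult_le_compat; eauto using transfer_to_origin_le, transfer_from_one_le|].
  replace (c ^ (N - 1)) with (c ^ s * c ^ (N - 1 - s)) by (rewrite <- pow_add; f_equal; lia).
  replace ((2 * IZR h - 1) * L) with (IZR h * L + (IZR h - 1) * L) by ring.
  rewrite exp_plus. right. ring.
Qed.

End UpperBound.

(* Lower bounds come from a positive eigenfunction [psi]: expanding
   [transfer psi n h = c^n psi h] over endpoints, some endpoint [k] carries at
   least an average share, and walks [h -> k -> h] give the square. *)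
Lemma transfer_pinned_ge lam psi c B h n :
  0 <= lam -> (1 <= h)%Z ->
  (forall z, (0 <= z)%Z -> step_op lam psi z = c * psi z) ->
  (forall z, (0 <= z <= h + Z.of_nat n)%Z -> psi z <= B) ->
  (forall z, (0 <= z)%Z -> 0 < psi z -> 1 <= weight lam z) ->
  0 < c ^ n * psi h ->
  (c ^ n * psi h / (B * (IZR h + INR n + 1))) ^ 2 <= transfer lam (pinned lam h) (n + n) h.
Proof.
  intros Hl Hh Heig HB Hw Hpos.
  set (K := (Z.to_nat h + n + 1)%nat).
  assert (HK : INR K = IZR h + INR n + 1).
  { unfold K. rewrite !plus_INR, INR_IZR_INZ, Z2Nat.id by lia. simpl. ring. }
  assert (HK0 : 0 < INR K) by (rewrite HK; pose proof (pos_INR n); pose proof (IZR_le 1 h Hh); lra).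
  destruct (exists_ge_average (fun k => psi (Z.of_nat k) * transfer lam (delta (Z.of_nat k)) n h)
              K (c ^ n * psi h)) as [k [Hk Hge]].
  { unfold K; lia. }
  { rewrite <- transfer_delta_expansion, (transfer_eigen lam psi c) by (auto; lia || unfold K; lia).
    lra. }
  rewrite HK in Hge.
  set (Q := transfer lam (delta (Z.of_nat k)) n h) in *.
  assert (HQ : 0 <= Q) by (apply transfer_nonneg; auto; intros; apply delta_nonneg).
  assert (Hlhs : 0 < c ^ n * psi h / (IZR h + INR n + 1)) by (apply Rdiv_lt_0_compat; lra).
  assert (Hpk : 0 < psi (Z.of_nat k)) by (destruct (Rlt_le_dec 0 (psi (Z.of_nat k))); nra).
  assert (HBk : psi (Z.of_nat k) <= B) by (apply HB; unfold K in Hk; lia).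
  assert (HQb : c ^ n * psi h / (B * (IZR h + INR n + 1)) <= Q).
  { replace (c ^ n * psi h / (B * (IZR h + INR n + 1)))
      with (c ^ n * psi h / (IZR h + INR n + 1) / B) by (field; lra).
    apply Rle_div_l; nra. }
  assert (Hwk : 1 <= weight lam (Z.of_nat k)) by (apply Hw; lia || auto).
  pose proof (transfer_pinned_square lam h (Z.of_nat k) n Hl) as Hsq. fold Q in Hsq.
  assert (0 <= c ^ n * psi h / (B * (IZR h + INR n + 1))).
  { apply Rlt_le, Rdiv_lt_0_compat; [lra | apply Rmult_lt_0_compat; lra]. }
  eapply Rle_trans; [|apply Hsq].
  eapply Rle_trans; [apply pow_incr; split; eauto|].
  pose proof (pow2_ge_0 Q). nra.
Qed.

Lemma exp_le_compat x y : x <= y -> exp x <= exp y.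
Proof. intros [H | ->]; [left; apply exp_increasing | right]; auto. Qed.

Lemma transfer_pinned_ge_poly lam h n : 0 <= lam -> (1 <= h)%Z ->
  (2 ^ n / ((IZR h + INR n + 1) * (IZR h + INR n + 1))) ^ 2
  <= transfer lam (pinned lam h) (n + n) h.
Proof.
  intros Hl Hh. pose proof (IZR_le 1 h Hh). pose proof (pos_INR n).
  set (R := IZR h + INR n + 1).
  assert (HX : 0 < 2 ^ n / (R * R)) by (apply Rdiv_lt_0_compat; [apply pow_lt | unfold R]; nra).
  (* [psi z = z] is an eigenfunction of the walk killed at [-1] with contact weight [0] *)
  assert (Hkilled : (2 ^ n * IZR h / (R * R)) ^ 2 <= transfer 0 (pinned 0 h) (n + n) h).
  { apply (transfer_pinned_ge 0 IZR 2 R h n); try lra; try lia.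
    - intros z Hz. unfold step_op, weight. destruct (Z.eqb_spec z 0) as [->|]; [simpl; ring|].
      rewrite plus_IZR, minus_IZR. ring.
    - intros z Hz. unfold R. rewrite INR_IZR_INZ, <- plus_IZR, <- plus_IZR. apply IZR_le. lia.
    - intros z Hz Hpos. unfold weight. destruct (Z.eqb_spec z 0) as [->|]; [simpl in Hpos|]; lra.
    - apply Rmult_lt_0_compat; [apply pow_lt|]; lra. }
  assert (Hweight : transfer 0 (pinned 0 h) (n + n) h <= transfer lam (pinned lam h) (n + n) h).
  { rewrite (transfer_ext 0 (pinned 0 h) (pinned lam h)).
    - apply transfer_mono_weight; [lra | intros; apply pinned_nonneg; lra].
    - intros z _. unfold pinned, delta, weight. zcases; subst; try lia; ring. }
  assert ((2 ^ n / (R * R)) ^ 2 <= (2 ^ n * IZR h / (R * R)) ^ 2).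
  { apply pow_incr.
    replace (2 ^ n * IZR h / (R * R)) with (IZR h * (2 ^ n / (R * R))) by (field; unfold R; nra).
    nra. }
  lra.
Qed.

Lemma transfer_pinned_ge_exp lam L h n :
  1 < lam -> (1 <= h)%Z -> L <= 0 -> (lam - 1) * exp (2 * L) = 1 ->
  ((exp L + exp (- L)) ^ n * exp (IZR h * L) / (IZR h + INR n + 1)) ^ 2
  <= transfer lam (pinned lam h) (n + n) h.
Proof.
  intros Hl Hh HL Hcontact.
  rewrite <- (Rmult_1_l (IZR h + INR n + 1)).
  apply (transfer_pinned_ge lam (fun z => exp (IZR z * L))); try lra; try lia.
  - intros z Hz. rewrite step_op_exp by auto.
    destruct (Z.eqb_spec z 0) as [->|]; [|reflexivity].
    rewrite Rmult_0_l, exp_0, Rmult_1_r. apply contact_weight_eq; auto.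
  - intros z Hz. rewrite <- exp_0. apply exp_le_compat.
    pose proof (IZR_le 0 z (proj1 Hz)). nra.
  - intros z _ _. unfold weight. destruct (Z.eqb z 0); lra.
  - apply Rmult_lt_0_compat; [apply pow_lt|]; pose proof (exp_pos L); pose proof (exp_pos (- L));
      try apply exp_pos; lra.
Qed.

Definition free_energy_seq (lam a : R) (n : nat) : R :=
  ln (Zpart lam a (2 * n)) / INR (2 * n) - ln 2.

Lemma even_ceil_bounds s : s <= IZR (even_ceil s) <= s + 2.
Proof.
  unfold even_ceil. destruct (archimed (- (s / 2))).
  rewrite mult_IZR, minus_IZR. simpl. lra.
Qed.

Lemma start_height_bounds a n : 0 < a < 1 / 2 -> (1 <= n)%nat ->
  (1 <= even_ceil (a * INR (2 * n)))%Z
  /\ 2 * a * INR n <= IZR (even_ceil (a * INR (2 * n))) <= 2 * a * INR n + 2.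
Proof.
  intros Ha Hn. rewrite mult_INR. replace (INR 2) with 2 by (simpl; ring).
  pose proof (even_ceil_bounds (a * (2 * INR n))) as Hb.
  assert (1 <= INR n) by (apply (le_INR 1); auto).
  split; [|nra].
  assert (0 < even_ceil (a * (2 * INR n)))%Z by (apply lt_IZR; simpl; nra). lia.
Qed.

Lemma free_energy_seq_transfer lam a n :
  free_energy_seq lam a n
  = ln (transfer lam (pinned lam (even_ceil (a * INR (2 * n)))) (n + n)
          (even_ceil (a * INR (2 * n)))) / (2 * INR n) - ln 2.
Proof.
  unfold free_energy_seq. rewrite Zpart_transfer. set (h := even_ceil _).
  replace (INR (2 * n)) with (2 * INR n) by (rewrite mult_INR; simpl; ring).
  replace (2 * n)%nat with (n + n)%nat by lia. reflexivity.
Qed.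

Lemma ln_div_le_of_le N Z g K :
  0 < INR N -> 0 < Z -> 0 <= K -> 0 <= g ->
  Z <= 2 ^ N * exp (INR N * g) * (1 + INR N * K) ->
  ln Z / INR N - ln 2 <= g + ln (1 + INR N * K) / INR N.
Proof.
  intros HN HZ HK Hg Hle.
  assert (0 < 1 + INR N * K) by nra.
  apply ln_le in Hle; auto.
  rewrite !ln_mult, ln_exp, ln_pow in Hle by (try apply Rmult_lt_0_compat;
    try apply pow_lt; try apply exp_pos; lra).
  apply Rmult_le_reg_r with (INR N); auto. unfold Rdiv.
  rewrite Rmult_minus_distr_r, !Rmult_plus_distr_r, !Rmult_assoc, Rinv_l by lra. lra.
Qed.

Lemma ln_div_ge_of_square_le n X Z :
  (1 <= n)%nat -> 0 < X -> X ^ 2 <= Z -> ln X / INR n <= ln Z / (2 * INR n).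
Proof.
  intros Hn HX Hle. assert (1 <= INR n) by (apply (le_INR 1); auto).
  apply ln_le in Hle; [|apply pow_lt; auto]. rewrite ln_pow in Hle by auto.
  simpl (INR 2) in Hle. unfold Rdiv. rewrite Rinv_mult.
  replace (ln X * / INR n) with (2 * ln X * (/ 2 * / INR n)) by (field; lra).
  apply Rmult_le_compat_r; [|lra].
  apply Rmult_le_pos; apply Rlt_le, Rinv_0_lt_compat; lra.
Qed.

Section SequenceBounds.

Variables (lam a : R).
Hypothesis Ha : 0 < a < 1 / 2.

Lemma Zpart_pos n : 0 <= lam -> (1 <= n)%nat -> 0 < Zpart lam a (2 * n).
Proof.
  intros Hl Hn. destruct (start_height_bounds a n Ha Hn) as [Hh _].
  rewrite Zpart_transfer. replace (2 * n)%nat with (n + n)%nat at 2 by lia.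
  eapply Rlt_le_trans; [|apply transfer_pinned_ge_poly; auto].
  pose proof (IZR_le 1 _ Hh). pose proof (pos_INR n).
  apply pow_lt, Rdiv_lt_0_compat; [apply pow_lt|]; nra.
Qed.

Lemma Zpart_le L n : 0 < lam -> L <= 0 -> (lam - 1) * exp (2 * L) <= 1 -> (1 <= n)%nat ->
  let c := exp L + exp (- L) in
  Zpart lam a (2 * n)
  <= 2 ^ (2 * n) * exp (INR (2 * n) * Rmax 0 (ln (c / 2) + 2 * a * L))
     * (1 + INR (2 * n) * (lam / (c * exp L))).
Proof.
  intros Hl HL Hcontact Hn c.
  assert (Hc : 0 < c) by (unfold c; pose proof (exp_pos L); pose proof (exp_pos (- L)); lra).
  set (g := Rmax 0 (ln (c / 2) + 2 * a * L)).
  set (K0 := lam / (c * exp L)).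
  assert (HK0 : 0 < K0) by (apply Rdiv_lt_0_compat, Rmult_lt_0_compat; auto using exp_pos).
  destruct (start_height_bounds a n Ha Hn) as [Hh Hhb].
  rewrite Zpart_transfer. set (h := even_ceil (a * INR (2 * n))) in *.
  set (N := (2 * n)%nat).
  assert (HN : INR N = 2 * INR n) by (unfold N; rewrite mult_INR; simpl; ring).
  pose proof (pos_INR N). assert (0 < 2 ^ N) by (apply pow_lt; lra).
  assert (Hexp : c ^ N * exp (2 * IZR h * L) <= 2 ^ N * exp (INR N * g)).
  { rewrite <- (exp_ln (c ^ N)), <- (exp_ln (2 ^ N)), !ln_pow, <- !exp_plus
      by (try apply pow_lt; lra).
    apply exp_le_compat.
    assert (ln (c / 2) + 2 * a * L <= g) by apply Rmax_r.
    rewrite ln_div in H1 by lra. nra. }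
  assert (HE : 1 <= exp (INR N * g)).
  { rewrite <- exp_0. apply exp_le_compat. pose proof (Rmax_l 0 (ln (c / 2) + 2 * a * L)).
    fold g in H1. nra. }
  eapply Rle_trans; [apply (transfer_pinned_le lam L h); auto|]. fold c.
  replace (INR N * lam * c ^ (N - 1) * exp ((2 * IZR h - 1) * L))
    with (INR N * K0 * (c ^ N * exp (2 * IZR h * L))).
  2:{ replace N with (S (N - 1)) at 2 by (unfold N; lia). simpl pow. unfold K0.
      replace ((2 * IZR h - 1) * L) with (2 * IZR h * L + - L) by ring.
      rewrite exp_plus, exp_Ropp. field. split; [apply Rgt_not_eq, exp_pos | lra]. }
  assert (INR N * K0 * (c ^ N * exp (2 * IZR h * L)) <= INR N * K0 * (2 ^ N * exp (INR N * g)))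
    by (apply Rmult_le_compat_l; [nra | auto]).
  nra.
Qed.

Lemma free_energy_seq_le L : 0 < lam -> L <= 0 -> (lam - 1) * exp (2 * L) <= 1 ->
  exists K, 0 <= K /\ forall n, (1 <= n)%nat ->
    free_energy_seq lam a n
    <= Rmax 0 (ln ((exp L + exp (- L)) / 2) + 2 * a * L) + ln (1 + K * INR n) / INR n.
Proof.
  intros Hl HL Hcontact.
  set (c := exp L + exp (- L)).
  assert (Hc : 0 < c) by (unfold c; pose proof (exp_pos L); pose proof (exp_pos (- L)); lra).
  set (K0 := lam / (c * exp L)).
  assert (HK0 : 0 < K0) by (apply Rdiv_lt_0_compat, Rmult_lt_0_compat; auto using exp_pos).
  exists (2 * K0). split; [lra|]. intros n Hn.
  assert (Hn1 : 1 <= INR n) by (apply (le_INR 1); auto).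
  assert (HN : INR (2 * n) = 2 * INR n) by (rewrite mult_INR; simpl; ring).
  assert (Hln : ln (1 + INR (2 * n) * K0) / INR (2 * n) <= ln (1 + 2 * K0 * INR n) / INR n).
  { rewrite HN. replace (1 + 2 * INR n * K0) with (1 + 2 * K0 * INR n) by ring.
    assert (0 <= ln (1 + 2 * K0 * INR n)) by (rewrite <- ln_1; apply ln_le; nra).
    unfold Rdiv. rewrite Rinv_mult.
    assert (0 < / INR n) by (apply Rinv_0_lt_compat; lra). nra. }
  pose proof (ln_div_le_of_le (2 * n) _ _ K0 ltac:(lra) (Zpart_pos n ltac:(lra) Hn) ltac:(lra)
                (Rmax_l _ _) (Zpart_le L n Hl HL Hcontact Hn)).
  unfold free_energy_seq. fold c in H. lra.
Qed.

Lemma free_energy_seq_ge_poly n : 0 <= lam -> (1 <= n)%nat ->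
  - (2 * ln (1 + 5 * INR n) / INR n) <= free_energy_seq lam a n.
Proof.
  intros Hl Hn. rewrite free_energy_seq_transfer.
  destruct (start_height_bounds a n Ha Hn) as [Hh Hhb].
  set (h := even_ceil (a * INR (2 * n))) in *.
  assert (Hn1 : 1 <= INR n) by (apply (le_INR 1); auto).
  set (R := IZR h + INR n + 1).
  assert (HR : 0 < R <= 1 + 5 * INR n) by (unfold R; nra).
  assert (HX : 0 < 2 ^ n / (R * R)) by (apply Rdiv_lt_0_compat; [apply pow_lt |]; nra).
  pose proof (ln_div_ge_of_square_le n _ _ Hn HX (transfer_pinned_ge_poly lam h n Hl Hh)) as Hlow.
  rewrite ln_div, ln_mult, ln_pow in Hlow by (try apply pow_lt; nra).
  assert (ln R <= ln (1 + 5 * INR n)) by (apply ln_le; lra).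
  replace ((INR n * ln 2 - (ln R + ln R)) / INR n) with (ln 2 - 2 * ln R / INR n) in Hlow
    by (field; lra).
  assert (2 * ln R / INR n <= 2 * ln (1 + 5 * INR n) / INR n)
    by (unfold Rdiv; apply Rmult_le_compat_r; [apply Rlt_le, Rinv_0_lt_compat |]; lra).
  lra.
Qed.

Lemma free_energy_seq_ge_exp L n :
  1 < lam -> L <= 0 -> (lam - 1) * exp (2 * L) = 1 -> (1 <= n)%nat ->
  ln ((exp L + exp (- L)) / 2) + 2 * a * L + 2 * L / INR n - ln (1 + 5 * INR n) / INR n
  <= free_energy_seq lam a n.
Proof.
  intros Hl HL Hcontact Hn. rewrite free_energy_seq_transfer.
  destruct (start_height_bounds a n Ha Hn) as [Hh Hhb].
  set (h := even_ceil (a * INR (2 * n))) in *.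
  assert (Hn1 : 1 <= INR n) by (apply (le_INR 1); auto).
  set (c := exp L + exp (- L)).
  assert (Hc : 0 < c) by (unfold c; pose proof (exp_pos L); pose proof (exp_pos (- L)); lra).
  set (R := IZR h + INR n + 1).
  assert (HR : 0 < R <= 1 + 5 * INR n) by (unfold R; nra).
  assert (HX : 0 < c ^ n * exp (IZR h * L) / R)
    by (apply Rdiv_lt_0_compat; [apply Rmult_lt_0_compat; [apply pow_lt | apply exp_pos] |]; lra).
  pose proof (ln_div_ge_of_square_le n _ _ Hn HX
                (transfer_pinned_ge_exp lam L h n Hl Hh HL Hcontact)) as Hlow.
  rewrite ln_div, ln_mult, ln_pow, ln_exp in Hlow
    by (try apply Rmult_lt_0_compat; try apply pow_lt; try apply exp_pos; lra).
  rewrite ln_div by lra.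
  assert (ln R <= ln (1 + 5 * INR n)) by (apply ln_le; lra).
  assert (Hdiv : forall u v, u <= v -> u / INR n <= v / INR n)
    by (intros; unfold Rdiv; apply Rmult_le_compat_r; [apply Rlt_le, Rinv_0_lt_compat |]; lra).
  pose proof (Hdiv _ _ H).
  assert (2 * a * L + 2 * L / INR n <= IZR h * L / INR n).
  { replace (2 * a * L + 2 * L / INR n) with ((2 * a * INR n + 2) * L / INR n) by (field; lra).
    apply Hdiv. nra. }
  replace ((INR n * ln c + IZR h * L - ln R) / INR n)
    with (ln c + IZR h * L / INR n - ln R / INR n) in Hlow by (field; lra).
  lra.
Qed.

End SequenceBounds.

Lemma ln_sqrt x : 0 < x -> ln (sqrt x) = ln x / 2.
Proof.
  intros Hx. pose proof (sqrt_lt_R0 x Hx).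
  rewrite <- (sqrt_sqrt x) at 2 by lra. rewrite ln_mult by auto. field.
Qed.

Lemma exp_half_ln x : 0 < x -> exp (ln x / 2) = sqrt x.
Proof. intros Hx. rewrite <- ln_sqrt by auto. apply exp_ln, sqrt_lt_R0; auto. Qed.

Lemma sub_le_mul_ln_div u v : 0 <= u -> 0 < v -> u - v <= u * (ln u - ln v).
Proof.
  intros [Hu | <-] Hv; [|lra].
  pose proof (exp_ineq1_le (ln (v / u))) as H.
  rewrite exp_ln, ln_div in H by (try apply Rdiv_lt_0_compat; auto).
  apply Rmult_le_compat_l with (r := u) in H; [|lra].
  replace (u * (v / u)) with v in H by (field; lra). nra.
Qed.

Lemma fpin_gt2 lam : 2 < lam -> fpin lam = ln lam - ln 2 - ln (lam - 1) / 2.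
Proof.
  intros Hl. unfold fpin. destruct (Rlt_dec 2 lam); [|lra].
  pose proof (sqrt_lt_R0 (lam - 1) ltac:(lra)).
  rewrite ln_div, ln_mult, ln_sqrt by lra. ring.
Qed.

Lemma fpin_le2 lam : lam <= 2 -> fpin lam = 0.
Proof. intros Hl. unfold fpin. destruct (Rlt_dec 2 lam); [lra | auto]. Qed.

Definition gap (a lam : R) : R := fpin lam - a * ln (lam - 1).

Definition free_energy (lam a : R) : R :=
  if Rlt_dec 2 lam then Rmax 0 (gap a lam) else 0.

Section ExponentialProfiles.

Variables (lam a : R).

(* For [lam > 2] the profile [exp (z L)] is an exact eigenfunction. *)
Lemma profile_gt2 : 2 < lam ->
  let L := - (ln (lam - 1) / 2) in
  L <= 0 /\ (lam - 1) * exp (2 * L) = 1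
  /\ ln ((exp L + exp (- L)) / 2) + 2 * a * L = gap a lam.
Proof.
  intros Hl L.
  assert (Hln : 0 < ln (lam - 1)) by (rewrite <- ln_1; apply ln_increasing; lra).
  pose proof (sqrt_lt_R0 (lam - 1) ltac:(lra)) as Hs.
  pose proof (sqrt_sqrt (lam - 1) ltac:(lra)) as Hss.
  assert (E1 : exp (- L) = sqrt (lam - 1))
    by (unfold L; rewrite Ropp_involutive; apply exp_half_ln; lra).
  assert (E2 : exp L = / sqrt (lam - 1)) by (rewrite <- E1, exp_Ropp, Rinv_inv; reflexivity).
  split; [unfold L; lra|]. split.
  - replace (2 * L) with (L + L) by ring. rewrite exp_plus, E2. rewrite <- Hss at 1. field. lra.
  - unfold gap. rewrite E1, E2, fpin_gt2 by lra.
    replace ((/ sqrt (lam - 1) + sqrt (lam - 1)) / 2)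
      with ((1 + sqrt (lam - 1) * sqrt (lam - 1)) / (2 * sqrt (lam - 1))) by (field; lra).
    rewrite Hss. replace (1 + (lam - 1)) with lam by ring.
    rewrite ln_div, ln_mult, ln_sqrt by lra. unfold L. field.
Qed.

(* For [lam <= 2] a profile decaying at rate [(1 + 2a)/(1 - 2a)] is a
   supersolution whose exponential cost is nonpositive. *)
Lemma profile_le2 : lam <= 2 -> 0 < a < 1 / 2 ->
  let L := (ln (1 - 2 * a) - ln (1 + 2 * a)) / 2 in
  L <= 0 /\ (lam - 1) * exp (2 * L) <= 1
  /\ ln ((exp L + exp (- L)) / 2) + 2 * a * L <= 0.
Proof.
  intros Hl Ha L.
  set (p := 1 + 2 * a) in *. set (m := 1 - 2 * a) in *.
  assert (Hp : 0 < p) by (unfold p; lra). assert (Hm : 0 < m) by (unfold m; lra).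
  assert (Hlm : ln m < ln p) by (apply ln_increasing; unfold m, p; lra).
  assert (E2 : exp (2 * L) = m / p).
  { unfold L. replace (2 * ((ln m - ln p) / 2)) with (ln m - ln p) by field.
    rewrite <- ln_div by auto. apply exp_ln, Rdiv_lt_0_compat; auto. }
  assert (Hmp : 0 < m / p < 1)
    by (split; [apply Rdiv_lt_0_compat | apply Rlt_div_l]; unfold m, p in *; lra).
  split; [unfold L; lra|]. split.
  - rewrite E2. destruct (Rle_dec 0 (lam - 1)); nra.
  - assert (Eu : (exp L + exp (- L)) / 2 = / (p * exp L)).
    { rewrite exp_Ropp. pose proof (exp_pos L).
      assert (exp L * exp L = m / p) by (rewrite <- exp_plus, <- E2; f_equal; ring).
      apply Rmult_eq_reg_r with (2 * p * exp L); [|nra].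
      field_simplify; try lra. unfold Rdiv in H0.
      replace (exp L ^ 2) with (exp L * exp L) by ring. rewrite H0. unfold m, p. field. lra. }
    rewrite Eu, ln_Rinv, ln_mult, ln_exp by (try apply Rmult_lt_0_compat; auto; apply exp_pos).
    pose proof (sub_le_mul_ln_div p 1 ltac:(lra) ltac:(lra)).
    pose proof (sub_le_mul_ln_div m 1 ltac:(lra) ltac:(lra)).
    rewrite ln_1 in *. unfold L.
    replace (- (ln p + (ln m - ln p) / 2) + 2 * a * ((ln m - ln p) / 2))
      with (- (p * ln p + m * ln m) / 2) by (unfold m, p; field).
    unfold m, p in *. lra.
Qed.

End ExponentialProfiles.

Lemma free_energy_seq_upper lam a : 0 < lam -> 0 < a < 1 / 2 ->
  exists K, 0 <= K /\ forall n, (1 <= n)%nat ->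
    free_energy_seq lam a n <= free_energy lam a + ln (1 + K * INR n) / INR n.
Proof.
  intros Hl Ha. unfold free_energy. destruct (Rlt_dec 2 lam) as [Hgt | Hle].
  - destruct (profile_gt2 lam a Hgt) as [HL [Hcontact Hval]].
    destruct (free_energy_seq_le lam a Ha _ Hl HL (Req_le _ _ Hcontact)) as [K [HK HU]].
    exists K. split; auto. rewrite <- Hval. auto.
  - destruct (profile_le2 lam a (Rnot_lt_le _ _ Hle) Ha) as [HL [Hcontact Hval]].
    destruct (free_energy_seq_le lam a Ha _ Hl HL Hcontact) as [K [HK HU]].
    exists K. split; auto. rewrite <- (Rmax_left 0 _ Hval). auto.
Qed.

Lemma ln_div_nonneg x n : 1 <= x -> (1 <= n)%nat -> 0 <= ln x / INR n.
Proof.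
  intros Hx Hn. pose proof (le_INR 1 n Hn). apply Rmult_le_pos.
  - rewrite <- ln_1. apply ln_le; lra.
  - apply Rlt_le, Rinv_0_lt_compat. simpl in *; lra.
Qed.

Lemma free_energy_seq_lower lam a : 0 < lam -> 0 < a < 1 / 2 ->
  exists D, 0 <= D /\ forall n, (1 <= n)%nat ->
    free_energy lam a - (2 * (ln (1 + 5 * INR n) / INR n) + D / INR n) <= free_energy_seq lam a n.
Proof.
  intros Hl Ha.
  assert (Hpoly : forall n, (1 <= n)%nat ->
            - (2 * (ln (1 + 5 * INR n) / INR n)) <= free_energy_seq lam a n).
  { intros n Hn. unfold Rdiv. rewrite <- Rmult_assoc. apply free_energy_seq_ge_poly; auto; lra. }
  unfold free_energy. destruct (Rlt_dec 2 lam) as [Hgt | Hle].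
  - exists (ln (lam - 1)). split; [rewrite <- ln_1; apply ln_le; lra|]. intros n Hn.
    destruct (profile_gt2 lam a Hgt) as [HL [Hcontact Hval]].
    pose proof (free_energy_seq_ge_exp lam a Ha _ n ltac:(lra) HL Hcontact Hn) as Hexp.
    rewrite Hval in Hexp.
    pose proof (Hpoly n Hn). pose proof (le_INR 1 n Hn).
    pose proof (ln_div_nonneg (1 + 5 * INR n) n ltac:(simpl in *; lra) Hn).
    pose proof (ln_div_nonneg (lam - 1) n ltac:(lra) Hn).
    replace (2 * - (ln (lam - 1) / 2) / INR n) with (- (ln (lam - 1) / INR n)) in Hexp
      by (field; simpl in *; lra).
    unfold Rmax. destruct (Rle_dec 0 (gap a lam)); lra.
  - exists 0. split; [lra|]. intros n Hn. pose proof (Hpoly n Hn).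
    replace (0 / INR n) with 0 by (unfold Rdiv; ring). lra.
Qed.

Lemma is_lim_seq_inv_INR : is_lim_seq (fun n => / INR n) 0.
Proof.
  replace (Finite 0) with (Rbar_inv p_infty) by reflexivity.
  apply is_lim_seq_inv; [apply is_lim_seq_INR | discriminate].
Qed.

Lemma ln_lt_twice_sqrt y : 0 < y -> ln y < 2 * sqrt y.
Proof.
  intros Hy. rewrite <- exp_half_ln by auto.
  pose proof (exp_ineq1_le (ln y / 2)). lra.
Qed.

(* [ln (1 + C n) / n <= 2 sqrt (1 + C) / sqrt n] *)
Lemma is_lim_seq_ln_affine_div C : 0 <= C ->
  is_lim_seq (fun n => ln (1 + C * INR n) / INR n) 0.
Proof.
  intros HC.
  assert (Hsqrt : is_lim_seq (fun n => sqrt (INR n)) p_infty)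
    by (eapply filterlim_comp; [apply is_lim_seq_INR | apply filterlim_sqrt_p]).
  assert (Hinv : is_lim_seq (fun n => 2 * sqrt (1 + C) * / sqrt (INR n)) 0).
  { replace (Finite 0) with (Rbar_mult (2 * sqrt (1 + C)) (Rbar_inv p_infty))
      by (simpl; f_equal; ring).
    apply is_lim_seq_scal_l, is_lim_seq_inv; [auto | discriminate]. }
  apply (is_lim_seq_le_le_loc (fun _ => 0) _ (fun n => 2 * sqrt (1 + C) * / sqrt (INR n)) 0);
    [|apply is_lim_seq_const | exact Hinv].
  exists 1%nat. intros n Hn. pose proof (le_INR 1 n Hn). simpl in H.
  split; [apply ln_div_nonneg; auto; nra|].
  pose proof (sqrt_lt_R0 (INR n) ltac:(lra)). pose proof (sqrt_sqrt (INR n) ltac:(lra)).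
  pose proof (ln_lt_twice_sqrt (1 + C * INR n) ltac:(nra)).
  assert (sqrt (1 + C * INR n) <= sqrt (1 + C) * sqrt (INR n))
    by (rewrite <- sqrt_mult by lra; apply sqrt_le_1_alt; nra).
  apply Rmult_le_reg_r with (INR n); [lra|]. unfold Rdiv.
  rewrite Rmult_assoc, Rinv_l, Rmult_1_r by lra. set (s := sqrt (INR n)) in *.
  replace (2 * sqrt (1 + C) * / s * INR n) with (2 * (sqrt (1 + C) * s))
    by (rewrite <- H1; field; lra).
  lra.
Qed.

Theorem is_lim_free_energy_seq lam a : 0 < lam -> 0 < a < 1 / 2 ->
  is_lim_seq (free_energy_seq lam a) (free_energy lam a).
Proof.
  intros Hl Ha.
  destruct (free_energy_seq_upper lam a Hl Ha) as [K [HK Hup]].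
  destruct (free_energy_seq_lower lam a Hl Ha) as [D [HD Hlow]].
  apply (is_lim_seq_le_le_loc
    (fun n => free_energy lam a - (2 * (ln (1 + 5 * INR n) / INR n) + D * / INR n)) _
    (fun n => free_energy lam a + ln (1 + K * INR n) / INR n)).
  - exists 1%nat. intros n Hn. split; [apply Hlow | apply Hup]; auto.
  - replace (Finite (free_energy lam a)) with (Finite (free_energy lam a - (2 * 0 + D * 0)))
      by (f_equal; ring).
    apply is_lim_seq_minus', is_lim_seq_plus'; [apply is_lim_seq_const| |].
    + apply (is_lim_seq_scal_l _ 2 0), is_lim_seq_ln_affine_div; lra.
    + apply (is_lim_seq_scal_l _ D 0), is_lim_seq_inv_INR.
  - replace (Finite (free_energy lam a)) with (Finite (free_energy lam a + 0)) by (f_equal; ring).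
    apply is_lim_seq_plus'; [apply is_lim_seq_const | apply is_lim_seq_ln_affine_div; auto].
Qed.

Lemma Ffree_eq_free_energy lam a : 0 < lam -> 0 < a < 1 / 2 -> Ffree lam a = free_energy lam a.
Proof.
  intros Hl Ha. unfold Ffree. fold (free_energy_seq lam a).
  rewrite (is_lim_seq_unique _ _ (is_lim_free_energy_seq lam a Hl Ha)). reflexivity.
Qed.

(* [q] is convex with [q' = artanh]; its tangent line at [t] is
   [x |-> x * artanh t - lcosh_artanh t], where [lcosh_artanh t = ln (cosh (artanh t))]. *)
Definition artanh (t : R) : R := (ln (1 + t) - ln (1 - t)) / 2.
Definition lcosh_artanh (t : R) : R := - (ln (1 + t) + ln (1 - t)) / 2.

Lemma sub_one_lt_mul_ln y : 0 < y -> y <> 1 -> y - 1 < y * ln y.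
Proof.
  intros Hy H1. assert (ln y <> 0).
  { intros E. apply H1. rewrite <- (exp_ln y), E by auto. apply exp_0. }
  pose proof (exp_ineq1 (- ln y) ltac:(lra)) as Hexp. rewrite exp_Ropp, exp_ln in Hexp by auto.
  apply Rmult_lt_compat_l with (r := y) in Hexp; [|lra]. rewrite Rinv_r in Hexp by lra. nra.
Qed.

Lemma q_ge_tangent t x : 0 <= t < 1 -> 0 <= x <= 1 -> x * artanh t - lcosh_artanh t <= q x.
Proof.
  intros Ht Hx. unfold q, artanh, lcosh_artanh.
  pose proof (sub_le_mul_ln_div (1 + x) (1 + t) ltac:(lra) ltac:(lra)).
  pose proof (sub_le_mul_ln_div (1 - x) (1 - t) ltac:(lra) ltac:(lra)).
  lra.
Qed.

Lemma q_eq_tangent t : q t = t * artanh t - lcosh_artanh t.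
Proof. unfold q, artanh, lcosh_artanh. field. Qed.

Lemma q_nonneg x : 0 <= x <= 1 -> 0 <= q x.
Proof.
  intros Hx. pose proof (q_ge_tangent 0 x ltac:(lra) Hx) as H. unfold artanh, lcosh_artanh in H.
  rewrite Rplus_0_r, Rminus_0_r, ln_1 in H. lra.
Qed.

Lemma q_pos x : 0 < x < 1 -> 0 < q x.
Proof.
  intros Hx. unfold q.
  pose proof (sub_one_lt_mul_ln (1 + x) ltac:(lra) ltac:(lra)).
  pose proof (sub_one_lt_mul_ln (1 - x) ltac:(lra) ltac:(lra)).
  lra.
Qed.

Lemma artanh_nonneg t : 0 <= t < 1 -> 0 <= artanh t.
Proof. intros Ht. unfold artanh. assert (ln (1 - t) <= ln (1 + t)) by (apply ln_le; lra). lra. Qed.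

Lemma lcosh_artanh_mono t s : 0 <= t <= s -> s < 1 -> lcosh_artanh t <= lcosh_artanh s.
Proof.
  intros H1 H2. unfold lcosh_artanh. rewrite <- !ln_mult by lra.
  assert (ln ((1 + s) * (1 - s)) <= ln ((1 + t) * (1 - t))) by (apply ln_le; nra). lra.
Qed.

Lemma dlam_gt2 lam : 2 < lam -> dlam lam = 1 - 2 / lam.
Proof.
  intros Hl. unfold dlam. rewrite fpin_gt2 by auto.
  replace (- 2 * (ln lam - ln 2 - ln (lam - 1) / 2))
    with (ln 2 + ln 2 + ln (lam - 1) + - ln lam + - ln lam) by field.
  rewrite !exp_plus, !exp_Ropp, !exp_ln by lra.
  replace (1 - 2 * 2 * (lam - 1) * / lam * / lam) with ((1 - 2 / lam)²)
    by (unfold Rsqr; field; lra).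
  apply sqrt_Rsqr. assert (2 / lam < 1) by (apply Rlt_div_l; lra). lra.
Qed.

Lemma dlam_le2 lam : lam <= 2 -> dlam lam = 0.
Proof.
  intros Hl. unfold dlam. rewrite fpin_le2, Rmult_0_r, exp_0, Rminus_diag by auto. apply sqrt_0.
Qed.

Lemma dlam_range lam : 0 <= dlam lam < 1.
Proof.
  destruct (Rlt_dec 2 lam).
  - rewrite dlam_gt2 by auto. assert (0 < 2 / lam) by (apply Rdiv_lt_0_compat; lra).
    assert (2 / lam < 1) by (apply Rlt_div_l; lra). lra.
  - rewrite dlam_le2 by lra. lra.
Qed.

Lemma dlam_gt2_facts lam : 2 < lam ->
  lcosh_artanh (dlam lam) = fpin lam /\ artanh (dlam lam) = ln (lam - 1) / 2
  /\ (1 + dlam lam) / (1 - dlam lam) = lam - 1.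
Proof.
  intros Hl. rewrite dlam_gt2 by auto. unfold lcosh_artanh, artanh.
  replace (1 + (1 - 2 / lam)) with (2 * (lam - 1) / lam) by (field; lra).
  replace (1 - (1 - 2 / lam)) with (2 / lam) by (field; lra).
  rewrite fpin_gt2 by auto.
  rewrite !ln_div, !ln_mult by (try apply Rmult_lt_0_compat; lra).
  split; [field | split; [field | field; lra]].
Qed.

Lemma lcosh_artanh_dlam lam : lcosh_artanh (dlam lam) = fpin lam.
Proof.
  destruct (Rlt_dec 2 lam); [apply dlam_gt2_facts; auto|].
  rewrite dlam_le2, fpin_le2 by lra. unfold lcosh_artanh.
  rewrite Rplus_0_r, Rminus_0_r, ln_1. field.
Qed.

Lemma gvar_eq lam a d : 0 < d -> gvar lam a d = fpin lam - 2 * a / d * (fpin lam + q d).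
Proof. intros. unfold gvar. field. lra. Qed.

Definition dstar (lam a : R) : R := Rmax (2 * a) (dlam lam).

Lemma dstar_range lam a : 0 < a < 1 / 2 -> 2 * a <= dstar lam a <= 1.
Proof.
  intros Ha. pose proof (dlam_range lam). unfold dstar.
  split; [apply Rmax_l | apply Rmax_lub; lra].
Qed.

(* [fpin lam = lcosh_artanh (dlam lam)], so the tangent line of [q] at [dstar]
   bounds [fpin lam + q d] from below, with equality at [d = dstar]. *)
Lemma gvar_le_dstar lam a d : 0 < a < 1 / 2 -> 2 * a <= d <= 1 ->
  gvar lam a d <= gvar lam a (dstar lam a).
Proof.
  intros Ha Hd. pose proof (dstar_range lam a Ha).
  pose proof (dlam_range lam) as HT. unfold dstar in *.
  rewrite !gvar_eq, <- (lcosh_artanh_dlam lam) by lra.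
  set (T := dlam lam) in *. set (B := lcosh_artanh).
  assert (Hda : 0 < 2 * a / d <= 1) by (split; [apply Rdiv_lt_0_compat | apply Rle_div_l]; lra).
  assert (Hscale : forall y, 2 * a / d * (d * y) = 2 * a * y) by (intros; field; lra).
  unfold Rmax. destruct (Rle_dec (2 * a) T).
  - pose proof (q_ge_tangent T d HT ltac:(lra)) as Htan.
    assert (2 * a * artanh T <= 2 * a / d * (B T + q d))
      by (rewrite <- Hscale; apply Rmult_le_compat_l; unfold B; lra).
    assert (2 * a / T * (B T + q T) = 2 * a * artanh T)
      by (unfold B; rewrite q_eq_tangent; field; lra).
    lra.
  - pose proof (q_ge_tangent (2 * a) d ltac:(lra) ltac:(lra)) as Htan.
    pose proof (q_eq_tangent (2 * a)).
    pose proof (lcosh_artanh_mono T (2 * a) ltac:(lra) ltac:(lra)).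
    replace (2 * a / (2 * a)) with 1 by (field; lra).
    assert (2 * a * artanh (2 * a) + 2 * a / d * (B T - B (2 * a)) <= 2 * a / d * (B T + q d))
      by (rewrite <- Hscale, <- Rmult_plus_distr_l; apply Rmult_le_compat_l; unfold B; lra).
    assert (B T - B (2 * a) <= 2 * a / d * (B T - B (2 * a))).
    { assert (2 * a / d * (B (2 * a) - B T) <= B (2 * a) - B T)
        by (rewrite <- (Rmult_1_l (B (2 * a) - B T)) at 2; apply Rmult_le_compat_r; unfold B; lra).
      lra. }
    unfold B in *. lra.
Qed.

Lemma free_energy_gt2 lam a : 2 < lam -> free_energy lam a = Rmax 0 (gap a lam).
Proof. intros Hl. unfold free_energy. destruct (Rlt_dec 2 lam); [auto | lra]. Qed.

Lemma free_energy_eq0 lam a : (2 < lam -> gap a lam <= 0) -> free_energy lam a = 0.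
Proof.
  intros H. unfold free_energy. destruct (Rlt_dec 2 lam) as [Hl|]; [apply Rmax_left, H, Hl | auto].
Qed.

Lemma free_energy_eq_gap lam a : 2 < lam -> 0 <= gap a lam -> free_energy lam a = gap a lam.
Proof. intros Hl H. rewrite free_energy_gt2 by auto. apply Rmax_right; auto. Qed.

Lemma free_energy_gvar lam a : 0 < a < 1 / 2 ->
  free_energy lam a = Rmax 0 (gvar lam a (dstar lam a)).
Proof.
  intros Ha. unfold dstar. pose proof (dlam_range lam) as HT.
  unfold Rmax at 2. destruct (Rle_dec (2 * a) (dlam lam)) as [Hle | Hgt].
  - assert (Hl : 2 < lam) by (destruct (Rlt_dec 2 lam); auto; rewrite dlam_le2 in Hle by lra; lra).
    destruct (dlam_gt2_facts lam Hl) as (E1 & E2 & _).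
    rewrite free_energy_gt2, gvar_eq by lra. f_equal.
    rewrite <- E1 at 2. rewrite q_eq_tangent, E1, E2. unfold gap. field. lra.
  - rewrite gvar_eq by lra. rewrite <- (lcosh_artanh_dlam lam).
    replace (lcosh_artanh (dlam lam) - 2 * a / (2 * a) * (lcosh_artanh (dlam lam) + q (2 * a)))
      with (- q (2 * a)) by (field; lra).
    pose proof (q_nonneg (2 * a) ltac:(lra)). rewrite Rmax_left by lra.
    apply free_energy_eq0. intros Hl. destruct (dlam_gt2_facts lam Hl) as (E1 & E2 & _).
    unfold gap. rewrite <- E1.
    replace (a * ln (lam - 1)) with (2 * a * artanh (dlam lam)) by (rewrite E2; field).
    pose proof (q_eq_tangent (dlam lam)). pose proof (q_nonneg (dlam lam) ltac:(lra)).
    pose proof (artanh_nonneg (dlam lam) HT).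
    assert (dlam lam * artanh (dlam lam) <= 2 * a * artanh (dlam lam))
      by (apply Rmult_le_compat_r; lra).
    lra.
Qed.

(* On [(2, +oo)], [gap a lam = lcosh_artanh T - 2 a artanh T] with [T = dlam lam]. *)
Lemma gap_neg a lam : 0 < a < 1 / 2 -> 2 < lam -> dlam lam <= 2 * a -> gap a lam < 0.
Proof.
  intros Ha Hl HT. destruct (dlam_gt2_facts lam Hl) as (E1 & E2 & _).
  pose proof (dlam_range lam). unfold gap. rewrite <- E1.
  replace (a * ln (lam - 1)) with (2 * a * artanh (dlam lam)) by (rewrite E2; field).
  assert (0 < dlam lam)
    by (rewrite dlam_gt2 by auto; assert (2 / lam < 1) by (apply Rlt_div_l; lra); lra).
  pose proof (q_pos (dlam lam) ltac:(lra)) as Hq. rewrite q_eq_tangent in Hq.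
  pose proof (artanh_nonneg (dlam lam) ltac:(lra)).
  assert (dlam lam * artanh (dlam lam) <= 2 * a * artanh (dlam lam))
    by (apply Rmult_le_compat_r; lra).
  lra.
Qed.

Lemma gap_lt a lam1 lam2 : 0 < a < 1 / 2 -> 2 < lam1 < lam2 -> 2 * a < dlam lam1 ->
  gap a lam1 < gap a lam2.
Proof.
  intros Ha Hl HT.
  destruct (dlam_gt2_facts lam1 ltac:(lra)) as (E1 & E2 & _).
  destruct (dlam_gt2_facts lam2 ltac:(lra)) as (F1 & F2 & _).
  pose proof (dlam_range lam1). pose proof (dlam_range lam2).
  pose proof (q_ge_tangent (dlam lam2) (dlam lam1) ltac:(lra) ltac:(lra)) as Htan.
  rewrite q_eq_tangent in Htan.
  unfold gap. rewrite <- E1, <- F1.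
  replace (a * ln (lam1 - 1)) with (2 * a * artanh (dlam lam1)) by (rewrite E2; field).
  replace (a * ln (lam2 - 1)) with (2 * a * artanh (dlam lam2)) by (rewrite F2; field).
  assert (artanh (dlam lam1) < artanh (dlam lam2)).
  { rewrite E2, F2. assert (ln (lam1 - 1) < ln (lam2 - 1)) by (apply ln_increasing; lra). lra. }
  assert (0 < (dlam lam1 - 2 * a) * (artanh (dlam lam2) - artanh (dlam lam1)))
    by (apply Rmult_lt_0_compat; lra).
  nra.
Qed.

Lemma dlam_gt_of_gap_eq0 a lam : 0 < a < 1 / 2 -> 2 < lam -> gap a lam = 0 -> 2 * a < dlam lam.
Proof.
  intros Ha Hl H. destruct (Rlt_le_dec (2 * a) (dlam lam)) as [|Hle]; auto.
  pose proof (gap_neg a lam Ha Hl Hle). lra.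
Qed.

Lemma gap_root_unique a lam1 lam2 : 0 < a < 1 / 2 -> 2 < lam1 -> 2 < lam2 ->
  gap a lam1 = 0 -> gap a lam2 = 0 -> lam1 = lam2.
Proof.
  intros Ha H1 H2 E1 E2. destruct (Rtotal_order lam1 lam2) as [H | [H | H]]; auto.
  - pose proof (gap_lt a lam1 lam2 Ha ltac:(lra) (dlam_gt_of_gap_eq0 a lam1 Ha H1 E1)). lra.
  - pose proof (gap_lt a lam2 lam1 Ha ltac:(lra) (dlam_gt_of_gap_eq0 a lam2 Ha H2 E2)). lra.
Qed.

Lemma free_energy_pos lam a : 0 < a < 1 / 2 -> 0 < free_energy lam a ->
  2 < lam /\ 2 * a < dlam lam.
Proof.
  intros Ha Hpos. assert (H2 : 2 < lam).
  { destruct (Rlt_dec 2 lam) as [|Hle]; auto.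
    rewrite free_energy_eq0 in Hpos; [lra | contradiction]. }
  split; auto. destruct (Rlt_le_dec (2 * a) (dlam lam)) as [|Hle]; auto.
  pose proof (gap_neg a lam Ha H2 Hle). rewrite free_energy_gt2, Rmax_left in Hpos by lra. lra.
Qed.

(* [gap] written without [fpin]'s case split, so it extends smoothly to [lam > 1]. *)
Definition gap_ext (a lam : R) : R := ln lam - ln 2 - (1 / 2 + a) * ln (lam - 1).

Lemma gap_eq_ext a lam : 2 < lam -> gap a lam = gap_ext a lam.
Proof. intros. unfold gap, gap_ext. rewrite fpin_gt2 by auto. field. Qed.

Lemma is_derive_gap_ext a lam : 1 < lam ->
  is_derive (gap_ext a) lam (1 / lam - (1 / 2 + a) / (lam - 1)).
Proof. intros Hl. unfold gap_ext. auto_derive; [repeat split; lra | field; lra]. Qed.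

Lemma continuity_pt_gap_ext a lam : 1 < lam -> continuity_pt (gap_ext a) lam.
Proof.
  intros Hl. apply continuity_pt_filterlim, (ex_derive_continuous (gap_ext a)).
  eexists. apply is_derive_gap_ext; auto.
Qed.

(* [gap_ext] is negative where [dlam lam = 2 a] and tends to [+oo] like [(1/2 - a) ln lam]. *)
Lemma gap_root_exists a : 0 < a < 1 / 2 -> exists lc, 2 < lc /\ gap a lc = 0.
Proof.
  intros Ha.
  set (lam1 := 2 / (1 - 2 * a)).
  assert (Hl1 : 2 < lam1) by (unfold lam1; apply Rlt_div_r; lra).
  assert (Hneg : gap_ext a lam1 < 0).
  { rewrite <- gap_eq_ext by auto. apply gap_neg; auto.
    rewrite dlam_gt2 by auto. unfold lam1. right; field; lra. }
  set (M := 2 * ln 2 / (1 / 2 - a)).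
  set (lam2 := Rmax (lam1 + 1) (1 + exp M)).
  assert (Hl2 : lam1 + 1 <= lam2 /\ 1 + exp M <= lam2) by (split; [apply Rmax_l | apply Rmax_r]).
  assert (Hpos : 0 < gap_ext a lam2).
  { unfold gap_ext.
    assert (M <= ln (lam2 - 1)) by (rewrite <- (ln_exp M); apply ln_le; [apply exp_pos | lra]).
    assert (ln (lam2 - 1) <= ln lam2) by (apply ln_le; lra).
    assert (0 < ln 2) by (rewrite <- ln_1; apply ln_increasing; lra).
    assert (2 * ln 2 <= (1 / 2 - a) * ln (lam2 - 1)).
    { replace (2 * ln 2) with ((1 / 2 - a) * M) by (unfold M; field; lra).
      apply Rmult_le_compat_l; lra. }
    lra. }
  destruct (Ranalysis5.IVT_interv (gap_ext a) lam1 lam2) as [z [Hz1 Hz2]]; try lra.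
  { intros z Hz. apply continuity_pt_gap_ext. lra. }
  exists z. split; [lra|]. rewrite gap_eq_ext by lra. auto.
Qed.

(* Right of [lc], [gap] is positive (it increases), so [Ffree = gap_ext] there. *)
Lemma Ffree_right_derivative a lc : 0 < a < 1 / 2 -> 2 < lc -> gap a lc = 0 ->
  exists l, 0 < l /\
    filterlim (fun lam => (Ffree lam a - Ffree lc a) / (lam - lc)) (at_right lc) (locally l).
Proof.
  intros Ha Hlc H0.
  pose proof (dlam_gt_of_gap_eq0 a lc Ha Hlc H0) as HT. rewrite dlam_gt2 in HT by auto.
  set (l := 1 / lc - (1 / 2 + a) / (lc - 1)).
  exists l. split.
  { assert (2 < lc * (1 - 2 * a))
      by (assert (2 / lc < 1 - 2 * a) by lra; apply Rlt_div_l in H; lra).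
    replace l with ((lc * (1 - 2 * a) - 2) / (2 * lc * (lc - 1))) by (unfold l; field; lra).
    apply Rdiv_lt_0_compat, Rmult_lt_0_compat; lra. }
  pose proof (is_derive_gap_ext a lc ltac:(lra)) as Hd. apply is_derive_Reals in Hd.
  apply filterlim_locally. intros eps.
  destruct (Hd eps (cond_pos eps)) as [del Hdel].
  exists del. intros y Hy Hyl. change (Rabs (y - lc) < del) in Hy.
  change (Rabs ((Ffree y a - Ffree lc a) / (y - lc) - l) < eps).
  assert (gap a lc < gap a y) by (apply gap_lt; [auto | lra | rewrite dlam_gt2 by lra; lra]).
  rewrite !Ffree_eq_free_energy, !free_energy_eq_gap, !gap_eq_ext by lra.
  specialize (Hdel (y - lc) ltac:(lra) Hy). rewrite Rplus_minus in Hdel. auto.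
Qed.

Definition alt_sign (n : nat) : R := (-1) ^ n.

Lemma is_series_alt_sign t : Rabs t < 1 -> is_series (fun n => alt_sign n * t ^ n) (/ (1 + t)).
Proof.
  intros Ht. assert (H : Rabs (- t) < 1) by (rewrite Rabs_Ropp; auto).
  pose proof (is_series_geom _ H) as Hgeom. replace (1 - - t) with (1 + t) in Hgeom by ring.
  eapply is_series_ext; [|apply Hgeom]. intros n. unfold alt_sign.
  replace (- t) with ((-1) * t) by ring. apply Rpow_mult_distr.
Qed.

Lemma CV_radius_alt_sign x : Rabs x < 1 -> Rbar_lt (Rabs x) (CV_radius alt_sign).
Proof.
  intros Hx. set (r := (1 + Rabs x) / 2). pose proof (Rabs_pos x).
  assert (Hr : Rbar_le r (CV_radius alt_sign)).
  { apply CV_radius_bounded. exists 1. intros n.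
    unfold alt_sign. rewrite <- Rpow_mult_distr, <- RPow_abs.
    replace (Rabs (-1 * r)) with r by (rewrite Rabs_mult, Rabs_m1, Rabs_pos_eq; unfold r; lra).
    rewrite <- (pow1 n). apply pow_incr. unfold r; lra. }
  eapply Rbar_lt_le_trans; [|apply Hr]. simpl. unfold r. lra.
Qed.

Lemma abs_lt_of_between u x : Rabs u < 1 -> Rmin 0 u <= x <= Rmax 0 u -> Rabs x < 1.
Proof.
  intros Hu Hx. apply Rabs_def2 in Hu. unfold Rmin, Rmax in Hx.
  destruct (Rle_dec 0 u); apply Rabs_def1; lra.
Qed.

Lemma is_series_ln_1p u : Rabs u < 1 ->
  is_series (fun n => PS_Int alt_sign n * u ^ n) (ln (1 + u)).
Proof.
  intros Hu. apply is_pseries_R.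
  replace (ln (1 + u)) with (RInt (PSeries alt_sign) 0 u);
    [apply is_pseries_RInt, CV_radius_alt_sign; auto|].
  rewrite (RInt_ext _ (fun t => / (1 + t))).
  - apply is_RInt_unique.
    replace (ln (1 + u)) with (minus (ln (1 + u)) (ln (1 + 0)))
      by (rewrite Rplus_0_r, ln_1; unfold minus, plus, opp; simpl; ring).
    apply (is_RInt_derive (fun t => ln (1 + t))); intros x Hx;
      pose proof (abs_lt_of_between u x Hu Hx) as Hx1; apply Rabs_def2 in Hx1.
    + auto_derive; [lra | field; lra].
    + apply (ex_derive_continuous (fun t => / (1 + t))). auto_derive. lra.
  - intros x Hx. apply is_pseries_unique, is_pseries_R, is_series_alt_sign.
    apply (abs_lt_of_between u x Hu). split; apply Rlt_le; apply Hx.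
Qed.

Lemma PS_Int_alt_sign_bound n : Rabs (PS_Int alt_sign n) <= 1.
Proof.
  destruct n as [|n]; unfold PS_Int; [rewrite Rabs_R0; lra|].
  unfold alt_sign, Rdiv. rewrite Rabs_mult, <- RPow_abs, Rabs_m1, pow1, Rmult_1_l, Rabs_inv, S_INR.
  pose proof (pos_INR n). rewrite Rabs_pos_eq by lra.
  rewrite <- Rinv_1. apply Rinv_le_contravar; lra.
Qed.

Definition has_abs_pseries (u : nat -> R) (Y l : R) : Prop :=
  CV_disk u Y /\ is_series (fun n => u n * Y ^ n) l.

Lemma has_abs_pseries_plus u v Y lu lv :
  has_abs_pseries u Y lu -> has_abs_pseries v Y lv ->
  has_abs_pseries (fun n => u n + v n) Y (lu + lv).
Proof.
  intros [Cu Su] [Cv Sv]. split; [exact (CV_disk_plus u v Y Cu Cv)|].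
  eapply is_series_ext; [|exact (is_series_plus _ _ _ _ Su Sv)].
  intros n. simpl. unfold plus; simpl. ring.
Qed.

Lemma has_abs_pseries_scal c u Y l :
  has_abs_pseries u Y l -> has_abs_pseries (fun n => c * u n) Y (c * l).
Proof.
  intros [Cu Su]. split; [exact (CV_disk_scal c u Y Cu)|].
  eapply is_series_ext; [|exact (is_series_scal c _ _ Su)].
  intros n. simpl. unfold scal; simpl. unfold mult; simpl. ring.
Qed.

Lemma has_abs_pseries_const c Y :
  has_abs_pseries (fun n => if Nat.eqb n 0 then c else 0) Y c.
Proof.
  assert (Hz : forall (f : nat -> R), (forall n, f (S n) = 0) -> is_series f (f O)).
  { intros f Hf. apply is_series_decr_1. unfold plus, opp; simpl. rewrite Rplus_opp_r.
    apply (is_series_ext (fun _ => 0)); [intros n; symmetry; apply Hf|].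
    apply is_series_Reals. intros eps He. exists O. intros n _. unfold R_dist.
    rewrite sum_cte, Rmult_0_l, Rminus_0_r, Rabs_R0. lra. }
  split.
  - exists (Rabs (c * Y ^ 0)). apply (Hz (fun n => Rabs ((if Nat.eqb n 0 then c else 0) * Y ^ n))).
    intros n. simpl. rewrite Rmult_0_l. apply Rabs_R0.
  - pose proof (Hz (fun n => (if Nat.eqb n 0 then c else 0) * Y ^ n)) as H.
    simpl in H. rewrite Rmult_1_r in H. apply H. intros n. ring.
Qed.

(* Coefficients of [ln (b + Y) = ln b + ln (1 + Y / b)]. *)
Definition ln_coef (b : R) (n : nat) : R :=
  (if Nat.eqb n 0 then ln b else 0) + PS_Int alt_sign n / b ^ n.

Lemma ln_coef_bound b Y k : 0 < b ->
  Rabs (ln_coef b k * Y ^ k) <= (Rabs (ln b) + 1) * (Rabs Y / b) ^ k.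
Proof.
  intros Hb. unfold ln_coef. rewrite Rabs_mult, <- RPow_abs.
  pose proof (Rabs_pos (ln b)). pose proof (pow_le (Rabs Y / b) k).
  assert (0 <= Rabs Y / b)
    by (apply Rmult_le_pos; [apply Rabs_pos | apply Rlt_le, Rinv_0_lt_compat; lra]).
  destruct k as [|k].
  - simpl. unfold PS_Int. replace (ln b + 0 / 1) with (ln b) by field. lra.
  - simpl Nat.eqb. rewrite Rplus_0_l. unfold Rdiv at 1.
    rewrite Rabs_mult, Rabs_inv, <- RPow_abs, (Rabs_pos_eq b) by lra.
    replace ((Rabs Y / b) ^ S k) with (/ b ^ S k * Rabs Y ^ S k)
      by (unfold Rdiv; rewrite Rpow_mult_distr, pow_inv; ring).
    pose proof (PS_Int_alt_sign_bound (S k)).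
    assert (0 <= / b ^ S k * Rabs Y ^ S k)
      by (apply Rmult_le_pos;
          [apply Rlt_le, Rinv_0_lt_compat, pow_lt | apply pow_le, Rabs_pos]; lra).
    rewrite Rmult_assoc. apply Rle_trans with (1 * (/ b ^ S k * Rabs Y ^ S k)); [|nra].
    apply Rmult_le_compat_r; lra.
Qed.

Lemma has_abs_pseries_ln b Y : 0 < b -> Rabs Y < b -> has_abs_pseries (ln_coef b) Y (ln (b + Y)).
Proof.
  intros Hb HY.
  assert (Hq : 0 <= Rabs Y / b < 1).
  { split; [apply Rmult_le_pos; [apply Rabs_pos | apply Rlt_le, Rinv_0_lt_compat; lra]|].
    apply Rlt_div_l; lra. }
  split.
  - apply (ex_series_le (V := R_CompleteNormedModule) _
             (fun k => (Rabs (ln b) + 1) * (Rabs Y / b) ^ k)).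
    + intros k. rewrite Rabs_Rabsolu. apply ln_coef_bound. auto.
    + apply (ex_series_scal (Rabs (ln b) + 1) (fun k => (Rabs Y / b) ^ k)), ex_series_geom.
      rewrite Rabs_pos_eq; lra.
  - assert (Hu : Rabs (Y / b) < 1)
      by (unfold Rdiv; rewrite Rabs_mult, Rabs_inv, (Rabs_pos_eq b) by lra; apply Hq).
    pose proof (is_series_plus _ _ _ _ (proj2 (has_abs_pseries_const (ln b) 1))
                  (is_series_ln_1p _ Hu)) as H.
    replace (ln (b + Y)) with (plus (ln b) (ln (1 + Y / b))).
    + eapply is_series_ext; [|apply H]. intros n. unfold ln_coef, plus; simpl.
      destruct (Nat.eqb_spec n 0) as [->|].
      * unfold PS_Int. simpl. field.
      * rewrite pow1. unfold Rdiv. rewrite Rpow_mult_distr, pow_inv. ring.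
    + apply Rabs_def2 in Hu. unfold plus; simpl.
      rewrite <- ln_mult by (unfold Rdiv in *; lra). f_equal. field. lra.
Qed.

Lemma sum_f_R0_two (f : nat -> R) m : (forall i, (2 <= i)%nat -> f i = 0) ->
  sum_f_R0 f (S m) = f O + f 1%nat.
Proof.
  intros H. induction m; [simpl; ring|].
  simpl sum_f_R0 in *. rewrite IHm, (H (S (S m))) by lia. ring.
Qed.

Lemma analytic_at2_affine F x0 y0 r u v f g : 0 < r ->
  (forall y, Rabs (y - y0) < r ->
     has_abs_pseries u (y - y0) (f y) /\ has_abs_pseries v (y - y0) (g y)) ->
  (forall x y, Rabs (x - x0) < r -> Rabs (y - y0) < r -> F x y = f y + (x - x0) * g y) ->
  analytic_at2 F x0 y0.
Proof.
  intros Hr Hfg HF. exists r. split; auto.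
  exists (fun i m => match i with O => u m | 1%nat => v m | _ => 0 end).
  intros x y Hx Hy. destruct (Hfg y Hy) as [[Cu Su] [Cv Sv]].
  set (X := x - x0) in *. set (Y := y - y0) in *.
  assert (Diag : forall (G : nat -> nat -> R) n, (forall i m, (2 <= i)%nat -> G i m = 0) ->
     sum_f_R0 (fun i => G i (n - i)%nat) n = G O n + match n with O => 0 | S m => G 1%nat m end).
  { intros G n HG. destruct n; [simpl; ring|].
    rewrite (sum_f_R0_two (fun i => G i (S n - i)%nat)) by (intros; apply HG; auto).
    replace (S n - 1)%nat with n by lia. replace (S n - 0)%nat with (S n) by lia. reflexivity. }
  split.
  - apply (ex_series_ext (fun n => Rabs (u n * Y ^ n)
                                 + match n with O => 0 | S m => Rabs X * Rabs (v m * Y ^ m) end)).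
    { intros n. rewrite (Diag (fun i m => Rabs (match i with O => u m | 1%nat => v m | _ => 0 end
                                                 * X ^ i * Y ^ m))).
      - destruct n; simpl; rewrite !Rabs_mult, ?Rabs_R1; ring.
      - intros [|[|i]] m Hi; try lia. rewrite !Rmult_0_l. apply Rabs_R0. }
    apply (ex_series_plus (V := R_NormedModule) (fun n => Rabs (u n * Y ^ n))); [exact Cu|].
    apply ex_series_incr_1. apply (ex_series_scal (Rabs X) _ Cv).
  - rewrite HF by auto.
    apply (is_series_ext (fun n => u n * Y ^ n
                                 + match n with O => 0 | S m => X * (v m * Y ^ m) end)).
    { intros n. rewrite (Diag (fun i m => match i with O => u m | 1%nat => v m | _ => 0 end
                                          * X ^ i * Y ^ m)).
      - destruct n; simpl; ring.
      - intros [|[|i]] m Hi; try lia. ring. }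
    apply (is_series_plus _ _ _ _ Su).
    apply is_series_decr_1. simpl.
    unfold plus, opp; simpl. rewrite Ropp_0, Rplus_0_r.
    apply (is_series_scal X _ _ Sv).
Qed.

Lemma Rabs_ln_sub_le x y m : 0 < m -> m <= x -> m <= y -> Rabs (ln x - ln y) <= Rabs (x - y) / m.
Proof.
  intros Hm Hx Hy.
  assert (Hone : forall u v, m <= u -> m <= v -> ln u - ln v <= Rabs (u - v) / m).
  { intros u v Hu Hv. rewrite <- ln_div by lra.
    pose proof (exp_ineq1_le (ln (u / v))). rewrite exp_ln in H by (apply Rdiv_lt_0_compat; lra).
    apply Rle_trans with ((u - v) / v);
      [unfold Rdiv in *; rewrite Rmult_minus_distr_r, Rinv_r in *; lra|].
    apply Rle_trans with (Rabs (u - v) / v).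
    - unfold Rdiv. apply Rmult_le_compat_r; [apply Rlt_le, Rinv_0_lt_compat; lra | apply Rle_abs].
    - unfold Rdiv. apply Rmult_le_compat_l; [apply Rabs_pos | apply Rinv_le_contravar; lra]. }
  apply Rabs_le. pose proof (Hone x y Hx Hy). pose proof (Hone y x Hy Hx).
  rewrite Rabs_minus_sym in H0. lra.
Qed.

Lemma gap_ext_close a0 lam0 a lam r : 0 < a0 < 1 / 2 -> 2 < lam0 -> r <= (lam0 - 2) / 2 ->
  Rabs (a - a0) < r -> Rabs (lam - lam0) < r -> 0 < a < 1 / 2 ->
  Rabs (gap_ext a lam - gap_ext a0 lam0) <= r * (2 + Rabs (ln (lam0 - 1))).
Proof.
  intros Ha0 Hl0 Hr Ha Hl Ha2.
  apply Rabs_def2 in Ha. apply Rabs_def2 in Hl.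
  assert (L1 : Rabs (ln lam - ln lam0) <= r).
  { eapply Rle_trans; [apply (Rabs_ln_sub_le _ _ 1); lra|]. rewrite Rdiv_1_r. apply Rabs_le; lra. }
  assert (L2 : Rabs (ln (lam - 1) - ln (lam0 - 1)) <= r).
  { eapply Rle_trans; [apply (Rabs_ln_sub_le _ _ 1); lra|]. rewrite Rdiv_1_r. apply Rabs_le; lra. }
  unfold gap_ext.
  replace (_ - _) with ((ln lam - ln lam0) - (1 / 2 + a) * (ln (lam - 1) - ln (lam0 - 1))
                        - (a - a0) * ln (lam0 - 1)) by ring.
  eapply Rle_trans; [apply Rabs_triang|]. eapply Rle_trans; [apply Rplus_le_compat_r, Rabs_triang|].
  rewrite !Rabs_Ropp, !Rabs_mult.
  assert (Rabs (1 / 2 + a) <= 1) by (apply Rabs_le; lra).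
  assert (Rabs (a - a0) <= r) by (apply Rabs_le; lra).
  pose proof (Rabs_pos (ln (lam - 1) - ln (lam0 - 1))). pose proof (Rabs_pos (ln (lam0 - 1))).
  pose proof (Rabs_pos (1 / 2 + a)). pose proof (Rabs_pos (a - a0)).
  assert (Rabs (1 / 2 + a) * Rabs (ln (lam - 1) - ln (lam0 - 1)) <= 1 * r)
    by (apply Rmult_le_compat; auto).
  assert (Rabs (a - a0) * Rabs (ln (lam0 - 1)) <= r * Rabs (ln (lam0 - 1)))
    by (apply Rmult_le_compat_r; auto).
  lra.
Qed.

Definition gap_coef (a0 lam0 : R) (n : nat) : R :=
  ln_coef lam0 n + (- (1 / 2 + a0) * ln_coef (lam0 - 1) n + -1 * (if Nat.eqb n 0 then ln 2 else 0)).

(* [gap_ext a y = gap_ext a0 y + (a - a0) (- ln (y - 1))], each part expanded at [lam0]. *)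
Lemma has_abs_pseries_gap_ext a0 lam0 y : 1 < lam0 -> Rabs (y - lam0) < lam0 - 1 ->
  has_abs_pseries (gap_coef a0 lam0) (y - lam0) (gap_ext a0 y)
  /\ has_abs_pseries (fun n => -1 * ln_coef (lam0 - 1) n) (y - lam0) (-1 * ln (y - 1)).
Proof.
  intros Hl0 Hy.
  pose proof (has_abs_pseries_ln lam0 (y - lam0) ltac:(lra) ltac:(lra)) as Sl.
  pose proof (has_abs_pseries_ln (lam0 - 1) (y - lam0) ltac:(lra) Hy) as Sl1.
  replace (lam0 + (y - lam0)) with y in Sl by ring.
  replace (lam0 - 1 + (y - lam0)) with (y - 1) in Sl1 by ring.
  split; [|apply has_abs_pseries_scal; auto].
  replace (gap_ext a0 y) with (ln y + (- (1 / 2 + a0) * ln (y - 1) + -1 * ln 2))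
    by (unfold gap_ext; ring).
  apply has_abs_pseries_plus; [auto|].
  apply has_abs_pseries_plus; apply has_abs_pseries_scal; [auto | apply has_abs_pseries_const].
Qed.

Lemma analytic_at2_locally_zero F x0 y0 r : 0 < r ->
  (forall x y, Rabs (x - x0) < r -> Rabs (y - y0) < r -> F x y = 0) -> analytic_at2 F x0 y0.
Proof.
  intros Hr HF.
  apply (analytic_at2_affine F x0 y0 r (fun n => if Nat.eqb n 0 then 0 else 0)
           (fun n => if Nat.eqb n 0 then 0 else 0) (fun _ => 0) (fun _ => 0) Hr).
  - intros y _. split; apply has_abs_pseries_const.
  - intros x y Hx Hy. rewrite HF by auto. ring.
Qed.

Section Analyticity.

Variables (a0 lam0 : R).
Hypotheses (Ha0 : 0 < a0 < 1 / 2) (Hl0 : 0 < lam0).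

Let r0 := Rmin (Rmin (a0 / 2) ((1 / 2 - a0) / 2)) (lam0 / 2).

Lemma r0_pos : 0 < r0.
Proof. unfold r0; repeat apply Rmin_glb_lt; lra. Qed.

Lemma Ffree_near a lam r : r <= r0 -> Rabs (a - a0) < r -> Rabs (lam - lam0) < r ->
  0 < a < 1 / 2 /\ a0 / 2 < a /\ Ffree lam a = free_energy lam a.
Proof.
  intros Hr Ha Hl. apply Rabs_def2 in Ha. apply Rabs_def2 in Hl.
  assert (r0 <= a0 / 2 /\ r0 <= (1 / 2 - a0) / 2 /\ r0 <= lam0 / 2) as (H1 & H2 & H3).
  { unfold r0. repeat split; [| |apply Rmin_r];
      (eapply Rle_trans; [apply Rmin_l | apply Rmin_l || apply Rmin_r]). }
  repeat split; try lra. apply Ffree_eq_free_energy; lra.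
Qed.

Lemma Ffree_analytic_le2 : lam0 <= 2 -> analytic_at2 (fun a lam => Ffree lam a) a0 lam0.
Proof.
  intros Hle. apply (analytic_at2_locally_zero _ _ _ r0 r0_pos). intros a lam Ha Hl.
  destruct (Ffree_near a lam r0 (Rle_refl _) Ha Hl) as (Ha' & Ha2 & ->).
  apply free_energy_eq0. intros Hlam. apply Rlt_le, gap_neg; auto.
  rewrite dlam_gt2 by auto.
  assert (r0 <= a0 / 2) by (unfold r0; eapply Rle_trans; apply Rmin_l).
  apply Rabs_def2 in Hl.
  assert (lam * (1 - a0) <= 2) by nra.
  replace (1 - 2 / lam) with ((lam - 2) / lam) by (field; lra).
  apply Rle_div_l; [lra | nra].
Qed.

(* Off the critical curve [gap_ext] keeps a strict sign near [(a0, lam0)], so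
   [Ffree] is locally either [0] or the analytic [gap_ext]. *)
Lemma Ffree_analytic_gt2 : 2 < lam0 -> gap_ext a0 lam0 <> 0 ->
  analytic_at2 (fun a lam => Ffree lam a) a0 lam0.
Proof.
  intros Hgt Hg0.
  set (K := 2 + Rabs (ln (lam0 - 1))).
  assert (HK : 0 < K) by (unfold K; pose proof (Rabs_pos (ln (lam0 - 1))); lra).
  assert (Habs : 0 < Rabs (gap_ext a0 lam0)) by (apply Rabs_pos_lt; auto).
  set (r := Rmin r0 (Rmin ((lam0 - 2) / 2) (Rabs (gap_ext a0 lam0) / (2 * K)))).
  assert (Hr : 0 < r).
  { pose proof r0_pos. unfold r; repeat apply Rmin_glb_lt; try lra. apply Rdiv_lt_0_compat; lra. }
  assert (Hr1 : r <= r0) by apply Rmin_l.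
  assert (Hr2 : r <= (lam0 - 2) / 2) by (unfold r; eapply Rle_trans; [apply Rmin_r | apply Rmin_l]).
  assert (Hr3 : r <= Rabs (gap_ext a0 lam0) / (2 * K))
    by (unfold r; eapply Rle_trans; [apply Rmin_r | apply Rmin_r]).
  assert (Hclose : forall a lam, Rabs (a - a0) < r -> Rabs (lam - lam0) < r ->
     2 < lam /\ Rabs (gap_ext a lam - gap_ext a0 lam0) <= Rabs (gap_ext a0 lam0) / 2).
  { intros a lam Ha Hl. destruct (Ffree_near a lam r Hr1 Ha Hl) as (Ha' & _).
    split; [apply Rabs_def2 in Hl; lra|].
    eapply Rle_trans; [apply (gap_ext_close a0 lam0 a lam r); auto|]. fold K.
    apply Rle_trans with (Rabs (gap_ext a0 lam0) / (2 * K) * K);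
      [apply Rmult_le_compat_r; lra | right; field; lra]. }
  destruct (Rlt_le_dec (gap_ext a0 lam0) 0) as [Hneg | Hpos].
  - apply (analytic_at2_locally_zero _ _ _ r Hr). intros a lam Ha Hl.
    destruct (Ffree_near a lam r Hr1 Ha Hl) as (_ & _ & ->).
    destruct (Hclose a lam Ha Hl) as [H2 Hc].
    rewrite (Rabs_left (gap_ext a0 lam0)) in Hc by auto.
    pose proof (Rle_abs (gap_ext a lam - gap_ext a0 lam0)).
    apply free_energy_eq0. intros _. rewrite gap_eq_ext by auto. lra.
  - apply (analytic_at2_affine _ a0 lam0 r (gap_coef a0 lam0) (fun n => -1 * ln_coef (lam0 - 1) n)
             (gap_ext a0) (fun y => -1 * ln (y - 1)) Hr).
    + intros y Hy. apply has_abs_pseries_gap_ext; lra.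
    + intros a lam Ha Hl.
      destruct (Ffree_near a lam r Hr1 Ha Hl) as (_ & _ & ->).
      destruct (Hclose a lam Ha Hl) as [H2 Hc].
      rewrite (Rabs_pos_eq (gap_ext a0 lam0)) in Hc by lra.
      pose proof (Rle_abs (- (gap_ext a lam - gap_ext a0 lam0))). rewrite Rabs_Ropp in H.
      rewrite free_energy_eq_gap, gap_eq_ext by (try rewrite gap_eq_ext; lra).
      unfold gap_ext. ring.
Qed.

End Analyticity.

Theorem proposition2p1 :
  (forall lam a : R, 0 < lam -> 0 < a < 1 / 2 ->
     is_lim_seq (fun n => ln (Zpart lam a (2 * n)) / INR (2 * n) - ln 2) (Ffree lam a)
     /\ (exists dstar, 2 * a <= dstar <= 1
           /\ (forall d, 2 * a <= d <= 1 -> gvar lam a d <= gvar lam a dstar)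
           /\ Ffree lam a = Rmax 0 (gvar lam a dstar))
     /\ (0 < Ffree lam a ->
           2 < lam
           /\ dlam lam = 1 - 2 / lam
           /\ 2 * a <= dlam lam <= 1
           /\ (forall d, 2 * a <= d <= 1 -> gvar lam a d <= gvar lam a (dlam lam))
           /\ Ffree lam a = Rmax 0 (gvar lam a (dlam lam))
           /\ Ffree lam a
              = Rmax 0 (fpin lam - a * ln ((1 + dlam lam) / (1 - dlam lam)))))
  /\ (forall a : R, 0 < a < 1 / 2 ->
        exists! lc, 2 < lc /\ fpin lc = a * ln ((1 + dlam lc) / (1 - dlam lc))
                           /\ fpin lc = a * ln (lc - 1))
  /\ (forall a lc : R, 0 < a < 1 / 2 -> 2 < lc -> fpin lc = a * ln (lc - 1) ->
        exists l, 0 < l /\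
          filterlim (fun lam => (Ffree lam a - Ffree lc a) / (lam - lc))
                    (at_right lc) (locally l))
  /\ (forall a0 lam0 : R, 0 < a0 < 1 / 2 -> 0 < lam0 ->
        ~ (2 < lam0 /\ fpin lam0 = a0 * ln (lam0 - 1)) ->
        analytic_at2 (fun a lam => Ffree lam a) a0 lam0).
Proof.
  split; [|split; [|split]].
  - intros lam a Hl Ha. rewrite Ffree_eq_free_energy by auto.
    split; [exact (is_lim_free_energy_seq lam a Hl Ha)|]. split.
    + exists (dstar lam a). split; [apply dstar_range; auto|].
      split; [intros; apply gvar_le_dstar; auto | apply free_energy_gvar; auto].
    + intros Hpos. destruct (free_energy_pos lam a Ha Hpos) as [H2 Hd].
      assert (Edstar : dstar lam a = dlam lam) by (apply Rmax_right; lra).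
      pose proof (dlam_range lam). destruct (dlam_gt2_facts lam H2) as (_ & _ & E3).
      split; [auto|]. split; [apply dlam_gt2; auto|]. split; [lra|].
      rewrite <- Edstar. split; [intros; apply gvar_le_dstar; auto|].
      split; [apply free_energy_gvar; auto|].
      rewrite Edstar, E3. apply free_energy_gt2; auto.
  - intros a Ha. destruct (gap_root_exists a Ha) as [lc [Hlc Hgap]]. exists lc. split.
    + destruct (dlam_gt2_facts lc Hlc) as (_ & _ & E3). rewrite E3. unfold gap in Hgap. lra.
    + intros l' (H1 & _ & H3). apply (gap_root_unique a lc l' Ha Hlc H1 Hgap). unfold gap. lra.
  - intros a lc Ha Hlc Hf. apply Ffree_right_derivative; auto. unfold gap. lra.
  - intros a0 lam0 Ha0 Hl0 Hnc. destruct (Rle_lt_dec lam0 2) as [Hle | Hgt].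
    + apply Ffree_analytic_le2; auto.
    + apply Ffree_analytic_gt2; auto. rewrite <- gap_eq_ext by auto. unfold gap.
      intros E. apply Hnc. split; [auto | lra].
Qed.
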